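(* Let $n\ge2$ and let $\gamma:I\to\mathbb{R}^2$ be a $C^\infty$ curve with $0\in I$. Then $\gamma'(0)=\cdots=\gamma^{(n-1)}(0)=\mathbf{0}$ and $\det(\gamma^{(n)}(0),\gamma^{(n+1)}(0))\neq0$ if and only if $\gamma$ is $\mathcal{A}$-equivalent at $t=0$ to a curve $\gamma_0(t)=(t^n,t^{n+1})+h(t)$, where $h$ is an $\mathbb{R}^2$-valued $C^\infty$ function with $h(0)=h'(0)=\cdots=h^{(n+2)}(0)=\mathbf{0}$.
   Context: $\mathcal{A}$-equivalence of curve germs: existence of $C^\infty$ diffeomorphism germs $\psi$ of $(\mathbb{R},0)$ and $\Psi$ of $\mathbb{R}^2$ with $\Psi\circ\gamma_1\circ\psi^{-1}=\gamma_2$. *)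

From Stdlib Require Import Reals List.
From Coquelicot Require Import Coquelicot.
Open Scope R_scope.

Definition smooth1_at (x0 : R) (f : R -> R) : Prop :=
  locally x0 (fun x => forall n : nat, ex_derive (Derive_n f n) x).

Definition smooth_curve_at (x0 : R) (g : R -> R * R) : Prop :=
  smooth1_at x0 (fun t => fst (g t)) /\ smooth1_at x0 (fun t => snd (g t)).

Definition deriv_vec (g : R -> R * R) (k : nat) (t : R) : R * R :=
  (Derive_n (fun s => fst (g s)) k t, Derive_n (fun s => snd (g s)) k t).

Definition det2 (u v : R * R) : R := fst u * snd v - snd u * fst v.

Definition pD (b : bool) (f : R * R -> R) : R * R -> R :=
  fun p => if b then Derive (fun t => f (t, snd p)) (fst p)
           else Derive (fun t => f (fst p, t)) (snd p).

Fixpoint iterD (w : list bool) (f : R * R -> R) : R * R -> R :=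
  match w with nil => f | b :: w' => pD b (iterD w' f) end.

Definition has_partials (f : R * R -> R) (q : R * R) : Prop :=
  ex_derive (fun t => f (t, snd q)) (fst q) /\
  ex_derive (fun t => f (fst q, t)) (snd q).

Definition smooth2_at (p : R * R) (f : R * R -> R) : Prop :=
  locally p (fun q => forall w : list bool,
    continuous (iterD w f) q /\ has_partials (iterD w f) q).

Definition smooth_map2_at (p : R * R) (F : R * R -> R * R) : Prop :=
  smooth2_at p (fun q => fst (F q)) /\ smooth2_at p (fun q => snd (F q)).

Definition diffeo1_germ (x0 : R) (phi phi_inv : R -> R) : Prop :=
  smooth1_at x0 phi /\ smooth1_at (phi x0) phi_inv /\
  locally x0 (fun x => phi_inv (phi x) = x) /\
  locally (phi x0) (fun y => phi (phi_inv y) = y).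

Definition diffeo2_germ (p : R * R) (Psi Psi_inv : R * R -> R * R) : Prop :=
  smooth_map2_at p Psi /\ smooth_map2_at (Psi p) Psi_inv /\
  locally p (fun z => Psi_inv (Psi z) = z) /\
  locally (Psi p) (fun w => Psi (Psi_inv w) = w).

Definition A_equiv_at0 (g1 g2 : R -> R * R) : Prop :=
  exists (psi psi_inv : R -> R) (Psi Psi_inv : R * R -> R * R),
    diffeo1_germ 0 psi psi_inv /\ psi 0 = 0 /\
    diffeo2_germ (g1 0) Psi Psi_inv /\
    locally 0 (fun t => Psi (g1 (psi_inv t)) = g2 t).

From Stdlib Require Import Reals Lra Lia Psatz Factorial List.
From Coquelicot Require Import Coquelicot.
Open Scope R_scope.

(* Write gamma(t) = gamma(0) + A t^n + B t^(n+1) + C t^(n+2) + O(t^(n+3)) with A, B, C in R^2.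
   If det(A, B) <> 0, the reparametrization t = s / (1 - al s - be s^2) turns this into
   gamma(0) + A s^n + (n al A + B) s^(n+1) + (Q A + (n+1) al B + C) s^(n+2) + O(s^(n+3)), where
   Q = n (be + al^2) + n (n-1)/2 al^2; Cramer's rule gives al, be killing the s^(n+2) term, and the
   affine map sending gamma(0), A, n al A + B to 0, e1, e2 yields (s^n, s^(n+1)) + O(s^(n+3)).
   Conversely, composing the model curve with a diffeomorphism germ psi(s) = c s + O(s^2) of
   (R, 0) and with Psi^-1 changes its (n+1)-jet only through the invertible Jacobian of Psi^-1
   and powers of c <> 0, which preserves both conditions on the derivatives of gamma. *)

(** * Differentiability on open subsets of R *)

Lemma open_Rabs_lt (r : R) : open (fun x => Rabs x < r).
Proof.
  apply open_ext with (fun x => - r < x /\ x < r).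
  - intros x. split; intros H.
    + now apply Rabs_def1.
    + destruct (Rabs_def2 _ _ H). now split.
  - apply open_and; [apply open_gt | apply open_lt].
Qed.

Lemma open_between (a b : R) : open (fun x => a < x < b).
Proof. apply open_and; [apply open_gt | apply open_lt]. Qed.

(* Only [k]-fold differentiability on [U] is required, not continuity of the [k]-th derivative. *)
Definition Ck (U : R -> Prop) (k : nat) (f : R -> R) : Prop :=
  forall x, U x -> forall j, (j < k)%nat -> ex_derive (Derive_n f j) x.

Lemma Derive_n_S (f : R -> R) j x : Derive_n f (S j) x = Derive_n (Derive f) j x.
Proof. rewrite (Derive_n_comp f j 1). now rewrite Nat.add_1_r. Qed.

Section Ck_theory.

Variable U : R -> Prop.
Hypothesis HU : open U.

Lemma Ck_S k f : Ck U (S k) f <-> (forall x, U x -> ex_derive f x) /\ Ck U k (Derive f).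
Proof.
  split.
  - intros H. split.
    + intros x Hx. apply (H x Hx 0%nat). lia.
    + intros x Hx j Hj. apply ex_derive_ext with (Derive_n f (S j)).
      * intros t; apply Derive_n_S.
      * apply (H x Hx (S j)). lia.
  - intros [H1 H2] x Hx [|j] Hj; [now apply H1|].
    apply ex_derive_ext with (Derive_n (Derive f) j).
    + intros t; symmetry; apply Derive_n_S.
    + apply H2; auto; lia.
Qed.

Lemma Ck_ext k f g : (forall x, U x -> f x = g x) -> Ck U k f -> Ck U k g.
Proof.
  intros Hfg H x Hx j Hj.
  apply ex_derive_ext_loc with (Derive_n f j).
  - apply filter_imp with U; [|now apply HU].
    intros y Hy. apply Derive_n_ext_loc.
    apply filter_imp with U; [|now apply HU]. auto.
  - now apply H.
Qed.

Lemma Ck_const k c : Ck U k (fun _ => c).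
Proof.
  intros x Hx j Hj. apply ex_derive_ext with (fun _ => match j with O => c | _ => 0 end).
  - intros t. destruct j; [reflexivity|]. symmetry; apply Derive_n_const.
  - apply ex_derive_const.
Qed.

Lemma Ck_id k : Ck U k (fun x => x).
Proof.
  intros x Hx [|j] Hj; [apply ex_derive_id|].
  apply ex_derive_ext with (fun _ => match j with O => 1 | _ => 0 end).
  - intros t. destruct j; [simpl; now rewrite Derive_id|].
    rewrite Derive_n_S. rewrite (Derive_n_ext _ (fun _ => 1)); [|intros; apply Derive_id].
    symmetry; apply Derive_n_const.
  - apply ex_derive_const.
Qed.

Lemma Ck_plus k f g : Ck U k f -> Ck U k g -> Ck U k (fun x => f x + g x).
Proof.
  revert f g. induction k as [|k IH]; intros f g Hf Hg; [intros x Hx j Hj; lia|].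
  apply Ck_S in Hf as [Hf1 Hf2]. apply Ck_S in Hg as [Hg1 Hg2].
  apply Ck_S. split.
  - intros x Hx. apply (ex_derive_plus f g x); auto.
  - apply Ck_ext with (fun x => Derive f x + Derive g x); auto.
    intros x Hx. symmetry. apply Derive_plus; auto.
Qed.

Lemma Ck_mult k f g : Ck U k f -> Ck U k g -> Ck U k (fun x => f x * g x).
Proof.
  revert f g. induction k as [|k IH]; intros f g Hf Hg; [intros x Hx j Hj; lia|].
  assert (Hf0 : Ck U k f) by (intros x Hx j Hj; apply Hf; auto).
  assert (Hg0 : Ck U k g) by (intros x Hx j Hj; apply Hg; auto).
  apply Ck_S in Hf as [Hf1 Hf2]. apply Ck_S in Hg as [Hg1 Hg2].
  apply Ck_S. split.
  - intros x Hx. apply ex_derive_mult; auto.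
  - apply Ck_ext with (fun x => Derive f x * g x + f x * Derive g x).
    + intros x Hx. symmetry. apply Derive_mult; auto.
    + apply Ck_plus; auto.
Qed.

Lemma Ck_scal k c f : Ck U k f -> Ck U k (fun x => c * f x).
Proof. intros H. apply Ck_mult; auto. apply Ck_const. Qed.

Lemma Ck_pow k f m : Ck U k f -> Ck U k (fun x => f x ^ m).
Proof. intros H. induction m as [|m IH]; [simpl; apply Ck_const | now apply Ck_mult]. Qed.

Lemma Ck_quadratic k (c0 c1 c2 : R) : Ck U k (fun s => c0 + c1 * s + c2 * s ^ 2).
Proof.
  apply Ck_plus; [apply Ck_plus|]; [apply Ck_const | |]; apply Ck_scal;
    [| apply Ck_pow]; apply Ck_id.
Qed.

End Ck_theory.

Lemma Ck_comp U V k f g : open U -> open V -> Ck V k f -> Ck U k g ->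
  (forall x, U x -> V (g x)) -> Ck U k (fun x => f (g x)).
Proof.
  intros HU HV. revert f g. induction k as [|k IH]; intros f g Hf Hg HUV; [intros x Hx j Hj; lia|].
  assert (Hg0 : Ck U k g) by (intros x Hx j Hj; apply Hg; auto).
  apply Ck_S in Hf as [Hf1 Hf2]; auto. apply Ck_S in Hg as [Hg1 Hg2]; auto.
  apply Ck_S; auto. split.
  - intros x Hx. apply ex_derive_comp; auto.
  - apply Ck_ext with (fun x => Derive g x * Derive f (g x)); auto.
    + intros x Hx. symmetry. apply Derive_comp; auto.
    + apply Ck_mult; auto.
Qed.

Lemma Ck_subset U V k f : (forall x, U x -> V x) -> Ck V k f -> Ck U k f.
Proof. intros HUV H x Hx j Hj. apply H; auto. Qed.

Lemma Ck_inv k : Ck (fun x => x <> 0) k Rinv.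
Proof.
  assert (HU : open (fun x : R => x <> 0)) by apply open_neq.
  induction k as [|k IH]; [intros x Hx j Hj; lia|].
  apply Ck_S; auto. split.
  - intros x Hx. apply ex_derive_Reals_1, derivable_pt_inv; auto. apply derivable_pt_id.
  - apply Ck_ext with (fun x => (-1) * (/ x * / x)); auto.
    + intros x Hx. rewrite (Derive_inv (fun x => x)); auto; [|apply ex_derive_id].
      rewrite Derive_id. field. auto.
    + apply Ck_scal, Ck_mult; auto.
Qed.

Lemma Ck_sqrt k : Ck (fun x => 0 < x) k sqrt.
Proof.
  assert (HU : open (fun x : R => 0 < x)) by apply open_gt.
  assert (Hd : forall x, 0 < x -> is_derive sqrt x (/ 2 * / sqrt x)).
  { intros x Hx. replace (/ 2 * / sqrt x) with (1 / (2 * sqrt ((fun t => t) x))).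
    - apply (is_derive_sqrt (fun t => t) x 1); auto.
      apply is_derive_Reals, derivable_pt_lim_id.
    - simpl. field. apply Rgt_not_eq, sqrt_lt_R0; auto. }
  induction k as [|k IH]; [intros x Hx j Hj; lia|].
  apply Ck_S; auto. split.
  - intros x Hx. eexists. now apply Hd.
  - apply Ck_ext with (fun x => / 2 * / sqrt x); auto.
    + intros x Hx. symmetry. now apply is_derive_unique, Hd.
    + apply Ck_scal; auto. apply Ck_comp with (fun x => x <> 0); auto.
      * apply open_neq.
      * apply Ck_inv.
      * intros x Hx. apply Rgt_not_eq, sqrt_lt_R0; auto.
Qed.

Lemma smooth1_at_of_Ck U x0 f : open U -> U x0 -> (forall k, Ck U k f) -> smooth1_at x0 f.
Proof.
  intros HU Hx H. unfold smooth1_at. apply filter_imp with U; [|now apply HU].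
  intros x Hux n. apply (H (S n) x Hux n). lia.
Qed.

Lemma Ck_of_smooth1_at U f : (forall x, U x -> smooth1_at x f) -> forall k, Ck U k f.
Proof. intros H k x Hx j Hj. apply (locally_singleton _ _ (H x Hx)). Qed.

(** * Landau symbols at 0 *)

Lemma locally0_intro (P : R -> Prop) e :
  0 < e -> (forall t, Rabs t < e -> P t) -> locally 0 P.
Proof.
  intros He H. exists (mkposreal e He). intros t Ht. apply H.
  change (Rabs (t - 0) < e) in Ht. now rewrite Rminus_0_r in Ht.
Qed.

Lemma locally0_elim (P : R -> Prop) :
  locally 0 P -> exists e, 0 < e /\ forall t, Rabs t < e -> P t.
Proof.
  intros [e He]. exists e. split; [apply cond_pos|].
  intros t Ht. apply He. change (Rabs (t - 0) < e). now rewrite Rminus_0_r.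
Qed.

Definition bigO (m : nat) (f : R -> R) : Prop :=
  exists C, 0 <= C /\ locally 0 (fun t => Rabs (f t) <= C * Rabs t ^ m).

Lemma bigO_ext_loc m f g : locally 0 (fun t => f t = g t) -> bigO m f -> bigO m g.
Proof.
  intros Hfg [C [HC Hf]]. exists C. split; auto.
  generalize (filter_and _ _ Hfg Hf). apply filter_imp. intros t [<- H]. exact H.
Qed.

Lemma bigO_ext m f g : (forall t, f t = g t) -> bigO m f -> bigO m g.
Proof. intros H. apply bigO_ext_loc. now apply filter_forall. Qed.

Lemma bigO_plus m f g : bigO m f -> bigO m g -> bigO m (fun t => f t + g t).
Proof.
  intros [C1 [HC1 H1]] [C2 [HC2 H2]]. exists (C1 + C2). split; [lra|].
  generalize (filter_and _ _ H1 H2). apply filter_imp. intros t [B1 B2].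
  eapply Rle_trans; [apply Rabs_triang | lra].
Qed.

Lemma bigO_scal m c f : bigO m f -> bigO m (fun t => c * f t).
Proof.
  intros [C [HC H]]. exists (Rabs c * C). split; [apply Rmult_le_pos; auto; apply Rabs_pos|].
  eapply filter_imp; [|exact H]. intros t Ht.
  rewrite Rabs_mult, Rmult_assoc. apply Rmult_le_compat_l; auto. apply Rabs_pos.
Qed.

Lemma bigO_minus m f g : bigO m f -> bigO m g -> bigO m (fun t => f t - g t).
Proof.
  intros Hf Hg. apply bigO_ext with (fun t => f t + (-1) * g t); [intros; ring|].
  apply bigO_plus, bigO_scal; auto.
Qed.

Lemma bigO_mult m k f g : bigO m f -> bigO k g -> bigO (m + k) (fun t => f t * g t).
Proof.
  intros [C1 [HC1 H1]] [C2 [HC2 H2]]. exists (C1 * C2). split; [now apply Rmult_le_pos|].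
  generalize (filter_and _ _ H1 H2). apply filter_imp. intros t [B1 B2].
  rewrite Rabs_mult, pow_add.
  replace (C1 * C2 * (Rabs t ^ m * Rabs t ^ k)) with ((C1 * Rabs t ^ m) * (C2 * Rabs t ^ k)) by ring.
  apply Rmult_le_compat; auto; apply Rabs_pos.
Qed.

Lemma bigO_pow m : bigO m (fun t => t ^ m).
Proof. exists 1. split; [lra|]. apply filter_forall. intros t. rewrite RPow_abs. lra. Qed.

Lemma bigO_const c : bigO 0 (fun _ => c).
Proof. exists (Rabs c). split; [apply Rabs_pos|]. apply filter_forall. intros t. simpl; lra. Qed.

Lemma bigO_zero m : bigO m (fun _ => 0).
Proof.
  exists 0. split; [lra|]. apply filter_forall. intros t.
  rewrite Rabs_R0, Rmult_0_l. lra.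
Qed.

Lemma bigO_weaken m k f : (k <= m)%nat -> bigO m f -> bigO k f.
Proof.
  intros Hkm [C [HC H]]. exists C. split; auto.
  generalize (filter_and _ _ H (locally0_intro (fun t => Rabs t < 1) 1 Rlt_0_1 (fun t Ht => Ht))).
  apply filter_imp. intros t [Ht Ht1]. eapply Rle_trans; [exact Ht|].
  apply Rmult_le_compat_l; auto.
  replace m with (k + (m - k))%nat by lia. rewrite pow_add.
  rewrite <- (Rmult_1_r (Rabs t ^ k)) at 2. apply Rmult_le_compat_l.
  - apply pow_le, Rabs_pos.
  - rewrite <- (pow1 (m - k)). apply pow_incr. split; [apply Rabs_pos | lra].
Qed.

Lemma bigO_monomial k m c : (k <= m)%nat -> bigO k (fun t => c * t ^ m).
Proof. intros H. apply (bigO_weaken m); auto. apply bigO_scal, bigO_pow. Qed.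

Lemma bigO_linear c : bigO 1 (fun t => c * t).
Proof. apply bigO_ext with (fun t => c * t ^ 1); [intros; ring|]. now apply bigO_monomial. Qed.

Lemma bigO_pow_mul m k f : bigO k f -> bigO (m + k) (fun t => t ^ m * f t).
Proof. intros H. apply bigO_mult; auto. apply bigO_pow. Qed.

Lemma bigO_locally_small m f : (0 < m)%nat -> bigO m f ->
  forall e, 0 < e -> locally 0 (fun t => Rabs (f t) < e).
Proof.
  intros Hm [C [HC H]] e He.
  assert (Hd : 0 < Rmin 1 (e / (C + 1))) by (apply Rmin_pos; [lra | apply Rdiv_lt_0_compat; lra]).
  generalize (filter_and _ _ H (locally0_intro _ _ Hd (fun t Ht => Ht))).
  apply filter_imp. intros t [Ht Hsmall].
  apply Rmin_Rgt_l in Hsmall as [Ht1 Hte].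
  assert (Hpow : Rabs t ^ m <= Rabs t).
  { destruct m as [|m]; [lia|]. change (Rabs t ^ S m) with (Rabs t * Rabs t ^ m).
    apply Rle_trans with (Rabs t * 1); [|lra].
    apply Rmult_le_compat_l; [apply Rabs_pos|].
    rewrite <- (pow1 m). apply pow_incr. split; [apply Rabs_pos | lra]. }
  assert (Rabs t * (C + 1) < e).
  { apply Rmult_lt_reg_r with (/ (C + 1)); [apply Rinv_0_lt_compat; lra|].
    rewrite Rmult_assoc, Rinv_r, Rmult_1_r by lra. exact Hte. }
  assert (0 <= Rabs t) by apply Rabs_pos. nra.
Qed.

Lemma locally0_comp_bigO1 g (P : R -> Prop) : bigO 1 g -> locally 0 P ->
  locally 0 (fun t => P (g t)).
Proof.
  intros Hg HP. destruct (locally0_elim P HP) as [e [He H]].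
  eapply filter_imp; [|exact (bigO_locally_small 1 g Nat.lt_0_1 Hg e He)].
  intros t Ht. now apply H.
Qed.

Lemma bigO_comp m f g : bigO m f -> bigO 1 g -> bigO m (fun t => f (g t)).
Proof.
  intros [C1 [HC1 H1]] Hg. pose proof Hg as [K [HK H2]].
  exists (C1 * K ^ m). split; [apply Rmult_le_pos; auto; now apply pow_le|].
  generalize (filter_and _ _ H2 (locally0_comp_bigO1 g _ Hg H1)).
  apply filter_imp. intros t [Hgt Hfgt]. eapply Rle_trans; [exact Hfgt|].
  rewrite Rmult_assoc, <- Rpow_mult_distr. apply Rmult_le_compat_l; auto.
  apply pow_incr. split; [apply Rabs_pos|]. now rewrite pow_1 in Hgt.
Qed.

Lemma bigO_div m f : bigO (S m) f -> bigO m (fun t => f t / t).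
Proof.
  intros [C [HC H]]. exists C. split; auto. eapply filter_imp; [|exact H]. intros t Ht.
  destruct (Req_dec t 0) as [->|Ht0].
  - unfold Rdiv. rewrite Rinv_0, Rmult_0_r, Rabs_R0.
    apply Rmult_le_pos; auto. apply pow_le. lra.
  - unfold Rdiv. rewrite Rabs_mult, Rabs_inv.
    apply Rmult_le_reg_r with (Rabs t); [now apply Rabs_pos_lt|].
    rewrite Rmult_assoc, Rinv_l, Rmult_1_r by now apply Rabs_no_R0.
    replace (C * Rabs t ^ m * Rabs t) with (C * Rabs t ^ S m) by (simpl; ring). exact Ht.
Qed.


(** * Taylor expansions at 0 *)

Lemma eq0_of_Rabs_le_linear (c K e : R) : 0 < e ->
  (forall t, 0 < t < e -> Rabs c <= K * t) -> c = 0.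
Proof.
  intros He H. destruct (Req_dec c 0) as [|Hc]; auto. exfalso.
  assert (Hc' : 0 < Rabs c) by now apply Rabs_pos_lt.
  assert (HK : 0 < K).
  { destruct (Rle_lt_dec K 0); auto. specialize (H (e / 2) ltac:(lra)). nra. }
  set (t := Rmin (e / 2) (Rabs c / (2 * K))).
  assert (Ht : 0 < t) by (apply Rmin_pos; [lra | apply Rdiv_lt_0_compat; lra]).
  assert (Ht1 : t <= e / 2) by apply Rmin_l.
  assert (Ht2 : t <= Rabs c / (2 * K)) by apply Rmin_r.
  specialize (H t ltac:(lra)).
  assert (K * t <= Rabs c / 2).
  { apply Rle_trans with (K * (Rabs c / (2 * K))); [apply Rmult_le_compat_l; lra|].
    right. field. lra. }
  lra.
Qed.

Lemma sum_f_R0_pow_shift (c : nat -> R) t m :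
  sum_f_R0 (fun j => c j * t ^ j) (S m) = c 0%nat + t * sum_f_R0 (fun j => c (S j) * t ^ j) m.
Proof.
  induction m as [|m IH]; [simpl; ring|].
  change (sum_f_R0 (fun j => c j * t ^ j) (S (S m))) with
    (sum_f_R0 (fun j => c j * t ^ j) (S m) + c (S (S m)) * t ^ (S (S m))).
  rewrite IH. simpl. ring.
Qed.

Lemma sum_f_R0_pow_Rabs_le (c : nat -> R) t m : Rabs t <= 1 ->
  Rabs (sum_f_R0 (fun j => c j * t ^ j) m) <= sum_f_R0 (fun j => Rabs (c j)) m.
Proof.
  intros Ht. induction m as [|m IH]; [simpl; rewrite Rmult_1_r; lra|].
  cbn [sum_f_R0]. eapply Rle_trans; [apply Rabs_triang|]. apply Rplus_le_compat; auto.
  rewrite Rabs_mult, <- RPow_abs. rewrite <- (Rmult_1_r (Rabs (c (S m)))) at 2.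
  apply Rmult_le_compat_l; [apply Rabs_pos|].
  rewrite <- (pow1 (S m)). apply pow_incr. split; [apply Rabs_pos | lra].
Qed.

Lemma sum_f_R0_pow_0 (c : nat -> R) m : sum_f_R0 (fun j => c j * 0 ^ j) m = c 0%nat.
Proof. induction m as [|m IH]; [simpl; ring|]. cbn [sum_f_R0]. rewrite IH. simpl. ring. Qed.

(* The bound is only required off [t = 0] so that the induction can divide by [t]. *)
Lemma poly_coef_eq0 m : forall c : nat -> R,
  (exists C, locally 0 (fun t => t <> 0 ->
     Rabs (sum_f_R0 (fun j => c j * t ^ j) m) <= C * Rabs t ^ (S m))) ->
  forall j, (j <= m)%nat -> c j = 0.
Proof.
  induction m as [|m IH]; intros c [C HC]; destruct (locally0_elim _ HC) as [e [He H]].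
  - intros j Hj. replace j with 0%nat by lia.
    apply eq0_of_Rabs_le_linear with C e; auto. intros t Ht.
    specialize (H t ltac:(rewrite Rabs_pos_eq by lra; lra) ltac:(intros ?; lra)).
    simpl in H. rewrite (Rabs_pos_eq t), !Rmult_1_r in H by lra. exact H.
  - set (q t := sum_f_R0 (fun j => c (S j) * t ^ j) m).
    set (K := sum_f_R0 (fun j => Rabs (c (S j))) m).
    assert (Hc0 : c 0%nat = 0).
    { apply eq0_of_Rabs_le_linear with (Rabs C + K) (Rmin e 1); [apply Rmin_pos; lra|].
      intros t [Ht0 Ht]. apply Rmin_Rgt_l in Ht as [Hte Ht1].
      specialize (H t ltac:(rewrite Rabs_pos_eq by lra; lra) ltac:(intros ?; lra)).
      rewrite sum_f_R0_pow_shift, (Rabs_pos_eq t) in H by lra. fold (q t) in H.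
      assert (Hq : Rabs (q t) <= K) by (apply sum_f_R0_pow_Rabs_le; rewrite Rabs_pos_eq by lra; lra).
      assert (Hp : C * t ^ S (S m) <= Rabs C * t).
      { assert (t ^ S m <= 1) by (rewrite <- (pow1 (S m)); apply pow_incr; lra).
        assert (0 <= t ^ S m) by (apply pow_le; lra).
        apply Rle_trans with (Rabs C * t ^ S (S m)).
        - apply Rmult_le_compat_r; [apply pow_le; lra | apply RRle_abs].
        - change (t ^ S (S m)) with (t * t ^ S m).
          apply Rmult_le_compat_l; [apply Rabs_pos|].
          apply Rle_trans with (t * 1); [apply Rmult_le_compat_l|]; lra. }
      replace (c 0%nat) with ((c 0%nat + t * q t) - t * q t) by ring.
      eapply Rle_trans; [apply Rabs_triang|].
      rewrite Rabs_Ropp, Rabs_mult, (Rabs_pos_eq t) by lra. nra. }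
    intros [|j] Hj; auto.
    apply (IH (fun j => c (S j))); [|lia].
    exists C. apply locally0_intro with e; auto. intros t Ht Ht0.
    specialize (H t Ht Ht0). rewrite sum_f_R0_pow_shift, Hc0, Rplus_0_l, Rabs_mult in H.
    apply Rmult_le_reg_l with (Rabs t); [now apply Rabs_pos_lt|].
    replace (Rabs t * (C * Rabs t ^ S m)) with (C * Rabs t ^ S (S m)) by (simpl; ring). exact H.
Qed.

Lemma poly_bigO_coef_eq0 m (c : nat -> R) :
  bigO (S m) (fun t => sum_f_R0 (fun j => c j * t ^ j) m) -> forall j, (j <= m)%nat -> c j = 0.
Proof.
  intros [C [_ H]]. apply poly_coef_eq0. exists C. eapply filter_imp; [|exact H]. auto.
Qed.

Definition taylor_coef (f : R -> R) (j : nat) : R := Derive_n f j 0 / INR (fact j).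

Definition taylor_poly (f : R -> R) (m : nat) (t : R) : R :=
  sum_f_R0 (fun j => taylor_coef f j * t ^ j) m.

Lemma Lagrange_remainder_le t k d B : 0 <= t -> Rabs d <= B ->
  Rabs (t ^ k / INR (fact k) * d) <= B * t ^ k.
Proof.
  intros Ht Hd. assert (Hf : 1 <= INR (fact k)) by (apply (le_INR 1), lt_O_fact).
  assert (Htk : 0 <= t ^ k) by now apply pow_le.
  assert (0 <= Rabs d) by apply Rabs_pos.
  unfold Rdiv. rewrite !Rabs_mult, Rabs_inv, !Rabs_pos_eq by lra.
  assert (0 < / INR (fact k) <= 1).
  { split; [apply Rinv_0_lt_compat; lra|]. rewrite <- Rinv_1. apply Rinv_le_contravar; lra. }
  apply Rle_trans with (t ^ k * Rabs d); [|rewrite Rmult_comm; apply Rmult_le_compat_r; lra].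
  apply Rmult_le_compat_r; auto. rewrite <- (Rmult_1_r (t ^ k)) at 2.
  apply Rmult_le_compat_l; lra.
Qed.

Lemma taylor_remainder_le_right f m e B :
  (forall t, 0 <= t < e -> forall k, (k <= S m)%nat -> ex_derive_n f k t) ->
  (forall t, 0 <= t < e -> Rabs (Derive_n f (S m) t) <= B) ->
  forall t, 0 <= t < e -> Rabs (f t - taylor_poly f m t) <= B * t ^ S m.
Proof.
  intros Hd HB t Ht. unfold taylor_poly. destruct (Req_dec t 0) as [->|Ht0].
  - rewrite sum_f_R0_pow_0. unfold taylor_coef. simpl. rewrite Rdiv_1_r, Rminus_diag, Rabs_R0. lra.
  - destruct (Taylor_Lagrange f m 0 t) as [z [Hz ->]]; [lra | intros s Hs; apply Hd; lra|].
    rewrite (sum_eq _ (fun j => taylor_coef f j * t ^ j)).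
    + rewrite Rminus_0_r. replace (_ + _ - _) with (t ^ S m / INR (fact (S m)) * Derive_n f (S m) z)
        by ring.
      apply Lagrange_remainder_le; [lra | apply HB; lra].
    + intros j Hj. unfold taylor_coef. rewrite Rminus_0_r. field. apply INR_fact_neq_0.
Qed.

Lemma taylor_poly_comp_opp f m t :
  (forall j, (j <= m)%nat -> Derive_n (fun y => f (- y)) j 0 = (-1) ^ j * Derive_n f j 0) ->
  taylor_poly (fun y => f (- y)) m t = taylor_poly f m (- t).
Proof.
  intros Hopp. apply sum_eq. intros j Hj. unfold taylor_coef. rewrite Hopp by auto.
  replace ((- t) ^ j) with ((-1) ^ j * t ^ j) by (rewrite <- Rpow_mult_distr; f_equal; ring).
  field. apply INR_fact_neq_0.
Qed.

Lemma continuous_locally_bounded {T : UniformSpace} (g : T -> R) x : continuous g x ->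
  exists B, locally x (fun t => Rabs (g t) <= B).
Proof.
  intros Hc. exists (Rabs (g x) + 1).
  eapply filter_imp; [|exact (Hc _ (locally_ball (g x) (mkposreal 1 Rlt_0_1)))].
  intros t Ht. change (Rabs (g t - g x) < 1) in Ht.
  replace (g t) with (g x + (g t - g x)) by ring.
  eapply Rle_trans; [apply Rabs_triang | lra].
Qed.

(* The Lagrange form of the remainder is applied on [0, t] to [f] or to [f (- _)]. *)
Lemma taylor_bigO f m : smooth1_at 0 f -> bigO (S m) (fun t => f t - taylor_poly f m t).
Proof.
  intros Hs. destruct (locally0_elim _ Hs) as [e1 [He1 Hder]].
  assert (Hc : continuous (Derive_n f (S m)) 0)
    by (apply (ex_derive_continuous (Derive_n f (S m)) 0), Hder; rewrite Rabs_R0; auto).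
  destruct (continuous_locally_bounded _ _ Hc) as [B HB].
  destruct (locally0_elim _ HB) as [e2 [He2 HB']].
  set (e := Rmin e1 e2).
  assert (He : 0 < e) by now apply Rmin_pos.
  assert (Hee : forall s, 0 <= s < e -> Rabs s < e1 /\ Rabs s < e2)
    by (intros s Hs0; apply Rmin_Rgt_l; fold e; rewrite Rabs_pos_eq; lra).
  assert (HB0 : 0 <= B) by (eapply Rle_trans; [apply Rabs_pos | apply HB'; rewrite Rabs_R0; auto]).
  assert (Hloc : forall s, Rabs s < e1 ->
    locally s (fun y => forall k, (k <= S m)%nat -> ex_derive_n f k y)).
  { intros s Hs0. apply (locally_open (fun y => Rabs y < e1)); [apply open_Rabs_lt | | exact Hs0].
    intros y Hy [|k] Hk; [exact I | now apply Hder]. }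
  exists B. split; auto. apply locally0_intro with e; auto. intros t Ht.
  apply Rabs_def2 in Ht.
  destruct (Rle_lt_dec 0 t) as [Hpos | Hneg].
  - rewrite Rabs_pos_eq with (x := t) by lra.
    apply taylor_remainder_le_right with e; [| | lra].
    + intros s Hs0 k Hk. apply (locally_singleton _ _ (Hloc s (proj1 (Hee s Hs0)))); auto.
    + intros s Hs0. apply HB', Hee; auto.
  - set (g y := f (- y)).
    assert (Hopp : forall s j, Rabs s < e1 -> (j <= S m)%nat ->
      Derive_n g j s = (-1) ^ j * Derive_n f j (- s)).
    { intros s j Hs0 Hj. apply Derive_n_comp_opp.
      eapply filter_imp; [|apply Hloc; rewrite Rabs_Ropp; exact Hs0]. intros y Hy k Hk. apply Hy. lia. }
    replace (f t - taylor_poly f m t) with (g (- t) - taylor_poly g m (- t)).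
    2:{ unfold g. rewrite Ropp_involutive, taylor_poly_comp_opp, Ropp_involutive; auto.
        intros j Hj. rewrite Hopp, Ropp_0; [reflexivity | rewrite Rabs_R0; auto | lia]. }
    rewrite (Rabs_left t) by lra.
    apply taylor_remainder_le_right with e; [| | lra].
    + intros s Hs0 k Hk. apply ex_derive_n_comp_opp.
      eapply filter_imp; [|apply Hloc; rewrite Rabs_Ropp; apply Hee; auto].
      intros y Hy j Hj. apply Hy. lia.
    + intros s Hs0. rewrite Hopp by (auto; apply Hee; auto).
      rewrite Rabs_mult, pow_1_abs, Rmult_1_l. apply HB'.
      rewrite Rabs_Ropp. apply Hee; auto.
Qed.

Lemma taylor_coef_unique f m (c : nat -> R) : smooth1_at 0 f ->
  bigO (S m) (fun s => f s - sum_f_R0 (fun j => c j * s ^ j) m) ->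
  forall j, (j <= m)%nat -> Derive_n f j 0 = INR (fact j) * c j.
Proof.
  intros Hs Hb j Hj.
  assert (Hp : bigO (S m) (fun s => sum_f_R0 (fun j => (taylor_coef f j - c j) * s ^ j) m)).
  { apply bigO_ext with (fun s => (f s - sum_f_R0 (fun j => c j * s ^ j) m) - (f s - taylor_poly f m s)).
    - intros s. unfold taylor_poly.
      rewrite (tech11 (fun j => (taylor_coef f j - c j) * s ^ j)
                      (fun j => taylor_coef f j * s ^ j) (fun j => c j * s ^ j));
        [ring | intros; ring].
    - apply bigO_minus; auto. now apply taylor_bigO. }
  assert (H := poly_bigO_coef_eq0 m _ Hp j Hj). cbv beta in H.
  assert (Hf := INR_fact_neq_0 j).
  replace (Derive_n f j 0) with ((taylor_coef f j - c j) * INR (fact j) + INR (fact j) * c j)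
    by (unfold taylor_coef; field; auto).
  rewrite H. ring.
Qed.

Lemma sum_f_R0_pow_eq0 m (c : nat -> R) s : (forall j, (j <= m)%nat -> c j = 0) ->
  sum_f_R0 (fun j => c j * s ^ j) m = 0.
Proof.
  intros H. induction m as [|m IH]; [simpl; rewrite H; auto; ring|].
  cbn [sum_f_R0]. rewrite IH, H; auto. ring.
Qed.

Lemma Derive_n_eq0_of_bigO f m : smooth1_at 0 f -> bigO (S m) f ->
  forall j, (j <= m)%nat -> Derive_n f j 0 = 0.
Proof.
  intros Hs Hb j Hj. rewrite (taylor_coef_unique f m (fun _ => 0)); auto; [ring|].
  apply bigO_ext with f; auto. intros s. rewrite sum_f_R0_pow_eq0; auto. ring.
Qed.

Lemma bigO_of_Derive_n_eq0 f m : smooth1_at 0 f ->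
  (forall j, (j <= m)%nat -> Derive_n f j 0 = 0) -> bigO (S m) f.
Proof.
  intros Hs H. apply bigO_ext with (fun s => f s - taylor_poly f m s); [|now apply taylor_bigO].
  intros s. unfold taylor_poly. rewrite sum_f_R0_pow_eq0; [ring|].
  intros j Hj. unfold taylor_coef. rewrite H; auto. unfold Rdiv; ring.
Qed.

Definition gap_coef (n : nat) (a0 A B C : R) (j : nat) : R :=
  match j with
  | O => a0
  | _ => if Nat.eqb j n then A else if Nat.eqb j (S n) then B
         else if Nat.eqb j (S (S n)) then C else 0
  end.

Section gap_coef.

Variables (n : nat) (a0 A B C : R).
Hypothesis Hn : (1 <= n)%nat.

Lemma gap_coef_gap j : (1 <= j < n)%nat -> gap_coef n a0 A B C j = 0.
Proof.
  intros Hj. destruct j as [|j]; [lia|]. unfold gap_coef.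
  rewrite (proj2 (Nat.eqb_neq _ n)), (proj2 (Nat.eqb_neq _ (S n))), (proj2 (Nat.eqb_neq _ (S (S n))));
    auto; lia.
Qed.

Lemma gap_coef_n : gap_coef n a0 A B C n = A.
Proof. destruct n as [|k]; [lia|]. unfold gap_coef. now rewrite Nat.eqb_refl. Qed.

Lemma gap_coef_Sn : gap_coef n a0 A B C (S n) = B.
Proof. unfold gap_coef. rewrite (proj2 (Nat.eqb_neq _ n)), Nat.eqb_refl; auto; lia. Qed.

Lemma gap_coef_SSn : gap_coef n a0 A B C (S (S n)) = C.
Proof.
  unfold gap_coef. rewrite (proj2 (Nat.eqb_neq _ n)), (proj2 (Nat.eqb_neq _ (S n))), Nat.eqb_refl;
    auto; lia.
Qed.

Lemma sum_gap_coef_lt m t : (m < n)%nat ->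
  sum_f_R0 (fun j => gap_coef n a0 A B C j * t ^ j) m = a0.
Proof.
  induction m as [|m IH]; intros Hm; [simpl; ring|].
  cbn [sum_f_R0]. rewrite IH, gap_coef_gap by lia. ring.
Qed.

Lemma sum_gap_coef_Sn t :
  sum_f_R0 (fun j => gap_coef n a0 A B C j * t ^ j) (S n) = a0 + A * t ^ n + B * t ^ S n.
Proof.
  set (F j := gap_coef n a0 A B C j * t ^ j).
  replace (sum_f_R0 F (S n)) with (sum_f_R0 F (pred n) + F n + F (S n)).
  - unfold F. rewrite sum_gap_coef_lt, gap_coef_n, gap_coef_Sn by lia. ring.
  - cbn [sum_f_R0]. f_equal.
    replace (sum_f_R0 F n) with (sum_f_R0 F (S (pred n))) by (f_equal; lia).
    replace (F n) with (F (S (pred n))) by (f_equal; lia). reflexivity.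
Qed.

Lemma sum_gap_coef_SSn t : sum_f_R0 (fun j => gap_coef n a0 A B C j * t ^ j) (S (S n)) =
  a0 + A * t ^ n + B * t ^ S n + C * t ^ S (S n).
Proof. cbn [sum_f_R0]. rewrite <- sum_gap_coef_Sn. simpl sum_f_R0. now rewrite gap_coef_SSn. Qed.

End gap_coef.

Lemma taylor_gap f n : (1 <= n)%nat -> smooth1_at 0 f ->
  (forall k, (1 <= k <= n - 1)%nat -> Derive_n f k 0 = 0) ->
  bigO (S (S (S n))) (fun t => f t - (f 0 + taylor_coef f n * t ^ n
    + taylor_coef f (S n) * t ^ S n + taylor_coef f (S (S n)) * t ^ S (S n))).
Proof.
  intros Hn Hs Hz. eapply bigO_ext; [|exact (taylor_bigO f (S (S n)) Hs)].
  intros t. unfold taylor_poly. rewrite <- sum_gap_coef_SSn by auto.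
  f_equal. apply sum_eq. intros j Hj. f_equal.
  destruct (Nat.eq_dec j 0) as [->|H0]; [unfold taylor_coef; simpl; field|].
  destruct (Compare_dec.lt_dec j n) as [Hl|Hl].
  { rewrite gap_coef_gap by lia. unfold taylor_coef. rewrite Hz by lia. unfold Rdiv; ring. }
  destruct (Nat.eq_dec j n) as [->|H1]; [now rewrite gap_coef_n|].
  destruct (Nat.eq_dec j (S n)) as [->|H2]; [now rewrite gap_coef_Sn|].
  replace j with (S (S n)) by lia. now rewrite gap_coef_SSn.
Qed.

Lemma Derive_n_of_gap_expansion f n a0 A B : (1 <= n)%nat -> smooth1_at 0 f ->
  bigO (S (S n)) (fun t => f t - (a0 + A * t ^ n + B * t ^ S n)) ->
  (forall k, (1 <= k <= n - 1)%nat -> Derive_n f k 0 = 0) /\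
  Derive_n f n 0 = INR (fact n) * A /\ Derive_n f (S n) 0 = INR (fact (S n)) * B.
Proof.
  intros Hn Hs Hb.
  assert (Hc := taylor_coef_unique f (S n) (gap_coef n a0 A B 0) Hs).
  specialize (Hc ltac:(eapply bigO_ext; [|exact Hb]; intros t; now rewrite sum_gap_coef_Sn)).
  repeat split.
  - intros k Hk. rewrite Hc, gap_coef_gap by lia. ring.
  - rewrite Hc, gap_coef_n by lia. reflexivity.
  - rewrite Hc, gap_coef_Sn by lia. reflexivity.
Qed.

(** * Functions of two variables *)

Lemma MVT_segment (f : R -> R) a b :
  (forall t, Rabs (t - a) <= Rabs (b - a) -> ex_derive f t) ->
  exists c, Rabs (c - a) <= Rabs (b - a) /\ f b - f a = Derive f c * (b - a).
Proof.
  intros Hd.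
  assert (Hbet : forall t, Rmin a b <= t <= Rmax a b -> Rabs (t - a) <= Rabs (b - a)).
  { intros t Ht. unfold Rmin, Rmax in Ht. destruct (Rle_dec a b).
    - rewrite !Rabs_pos_eq; lra.
    - rewrite !Rabs_left1; lra. }
  destruct (MVT_gen f a b (Derive f)) as [c [Hc Heq]].
  - intros x Hx. apply Derive_correct, Hd, Hbet. lra.
  - intros x Hx. apply derivable_continuous_pt, ex_derive_Reals_0, Hd, Hbet. lra.
  - exists c. split; auto.
Qed.

Lemma MVT_Rabs_le (f : R -> R) a b B :
  (forall t, Rabs (t - a) <= Rabs (b - a) -> ex_derive f t /\ Rabs (Derive f t) <= B) ->
  Rabs (f b - f a) <= B * Rabs (b - a).
Proof.
  intros H. destruct (MVT_segment f a b) as [c [Hc ->]]; [intros t Ht; now apply H|].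
  rewrite Rabs_mult. apply Rmult_le_compat_r; [apply Rabs_pos | now apply H].
Qed.

Lemma first_order_remainder_le (f : R -> R) a b B :
  (forall t, Rabs (t - a) <= Rabs (b - a) -> ex_derive f t /\ Rabs (Derive f t - Derive f a) <= B) ->
  Rabs (f b - f a - Derive f a * (b - a)) <= B * Rabs (b - a).
Proof.
  intros H. destruct (MVT_segment f a b) as [c [Hc ->]]; [intros t Ht; now apply H|].
  replace (Derive f c * (b - a) - Derive f a * (b - a)) with ((Derive f c - Derive f a) * (b - a))
    by ring.
  rewrite Rabs_mult. apply Rmult_le_compat_r; [apply Rabs_pos | now apply H].
Qed.

Lemma locally2_box (x0 y0 : R) (Q : R * R -> Prop) : locally (x0, y0) Q ->
  exists e, 0 < e /\ forall x y, Rabs (x - x0) < e -> Rabs (y - y0) < e -> Q (x, y).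
Proof.
  intros [e He]. exists e. split; [apply cond_pos|]. intros x y Hx Hy. apply He. now split.
Qed.

Lemma box_locally2 (x0 y0 e : R) (Q : R * R -> Prop) : 0 < e ->
  (forall x y, Rabs (x - x0) < e -> Rabs (y - y0) < e -> Q (x, y)) -> locally (x0, y0) Q.
Proof. intros He H. exists (mkposreal e He). intros [x y] [Hx Hy]. now apply H. Qed.

Notation dxx F := (iterD (true :: true :: nil) F).
Notation dxy F := (iterD (false :: true :: nil) F).
Notation dyy F := (iterD (false :: false :: nil) F).

Lemma smooth2_at_box (F : R * R -> R) x0 y0 : smooth2_at (x0, y0) F ->
  exists B e, 0 <= B /\ 0 < e /\ forall s u, Rabs (s - x0) < e -> Rabs (u - y0) < e ->
    ex_derive (fun t => F (t, u)) s /\ ex_derive (fun t => F (s, t)) u /\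
    ex_derive (fun t => pD true F (t, u)) s /\ ex_derive (fun t => pD true F (s, t)) u /\
    ex_derive (fun t => pD false F (s, t)) u /\
    Rabs (dxx F (s, u)) <= B /\ Rabs (dxy F (s, u)) <= B /\ Rabs (dyy F (s, u)) <= B.
Proof.
  intros Hs.
  assert (Hc : forall w, continuous (iterD w F) (x0, y0))
    by (intros w; apply (locally_singleton _ _ Hs)).
  destruct (continuous_locally_bounded _ _ (Hc (true :: true :: nil))) as [B1 HB1].
  destruct (continuous_locally_bounded _ _ (Hc (false :: true :: nil))) as [B2 HB2].
  destruct (continuous_locally_bounded _ _ (Hc (false :: false :: nil))) as [B3 HB3].
  destruct (locally2_box x0 y0 _ (filter_and _ _ Hs (filter_and _ _ HB1 (filter_and _ _ HB2 HB3))))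
    as [e [He Hbox]].
  assert (Hmax := conj (Rle_abs B1) (conj (Rle_abs B2) (Rle_abs B3))).
  assert (Hpos := conj (Rabs_pos B1) (conj (Rabs_pos B2) (Rabs_pos B3))).
  exists (Rabs B1 + Rabs B2 + Rabs B3), e. split; [lra | split; auto].
  intros s u Hs0 Hu0. destruct (Hbox s u Hs0 Hu0) as [Hw [H1 [H2 H3]]].
  destruct (Hw nil) as [_ [D1 D2]]. destruct (Hw (true :: nil)) as [_ [D3 D4]].
  destruct (Hw (false :: nil)) as [_ [_ D5]].
  repeat split; auto; lra.
Qed.

(* The three brackets [F(x,y) - F(x0,y) - F_x(x0,y) v1], [(F_x(x0,y) - F_x(x0,y0)) v1] and
   [F(x0,y) - F(x0,y0) - F_y(x0,y0) v2] are each controlled by a second partial derivative. *)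
Lemma taylor1_2d (F : R * R -> R) x0 y0 : smooth2_at (x0, y0) F ->
  exists C e, 0 <= C /\ 0 < e /\ forall v1 v2, Rabs v1 < e -> Rabs v2 < e ->
    Rabs (F (x0 + v1, y0 + v2) - F (x0, y0) - pD true F (x0, y0) * v1 - pD false F (x0, y0) * v2)
      <= C * (Rabs v1 + Rabs v2) ^ 2.
Proof.
  intros Hs. destruct (smooth2_at_box F x0 y0 Hs) as [B [e [HB [He Hbox]]]].
  exists B, e. split; [|split]; auto. intros v1 v2 Hv1 Hv2.
  assert (Hin : forall s u, Rabs (s - x0) <= Rabs v1 -> Rabs (u - y0) <= Rabs v2 -> _)
    by (intros s u Hs0 Hu0; exact (Hbox s u ltac:(lra) ltac:(lra))).
  set (x := x0 + v1). set (y := y0 + v2).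
  assert (Ex : x - x0 = v1) by (unfold x; ring). assert (Ey : y - y0 = v2) by (unfold y; ring).
  assert (Hx : Rabs (x - x0) <= Rabs v1) by (rewrite Ex; lra).
  assert (Hy : Rabs (y - y0) <= Rabs v2) by (rewrite Ey; lra).
  assert (Hx0 : Rabs (x0 - x0) <= Rabs v1) by (rewrite Rminus_diag, Rabs_R0; apply Rabs_pos).
  assert (Hy0 : Rabs (y0 - y0) <= Rabs v2) by (rewrite Rminus_diag, Rabs_R0; apply Rabs_pos).
  assert (T1 : Rabs (F (x, y) - F (x0, y) - pD true F (x0, y) * v1) <= B * Rabs v1 * Rabs v1).
  { rewrite <- Ex at 1 3. apply (first_order_remainder_le (fun s => F (s, y))). intros s Hs0.
    assert (Hs1 : Rabs (s - x0) <= Rabs v1) by now rewrite <- Ex.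
    split; [apply (Hin s y Hs1 Hy)|].
    apply Rle_trans with (B * Rabs (s - x0)); [|now apply Rmult_le_compat_l].
    apply (MVT_Rabs_le (fun s => pD true F (s, y)) x0 s B). intros s' Hs'.
    split; apply (Hin s' y ltac:(lra) Hy). }
  assert (T2 : Rabs ((pD true F (x0, y) - pD true F (x0, y0)) * v1) <= B * Rabs v2 * Rabs v1).
  { rewrite Rabs_mult. apply Rmult_le_compat_r; [apply Rabs_pos|]. rewrite <- Ey.
    apply (MVT_Rabs_le (fun u => pD true F (x0, u))). intros u Hu.
    assert (Hu1 : Rabs (u - y0) <= Rabs v2) by now rewrite <- Ey.
    split; apply (Hin x0 u Hx0 Hu1). }
  assert (T3 : Rabs (F (x0, y) - F (x0, y0) - pD false F (x0, y0) * v2) <= B * Rabs v2 * Rabs v2).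
  { rewrite <- Ey at 1 3. apply (first_order_remainder_le (fun u => F (x0, u))). intros u Hu.
    assert (Hu1 : Rabs (u - y0) <= Rabs v2) by now rewrite <- Ey.
    split; [apply (Hin x0 u Hx0 Hu1)|].
    apply Rle_trans with (B * Rabs (u - y0)); [|now apply Rmult_le_compat_l].
    apply (MVT_Rabs_le (fun u => pD false F (x0, u)) y0 u B). intros u' Hu'.
    split; apply (Hin x0 u' Hx0 ltac:(lra)). }
  replace (F (x, y) - F (x0, y0) - pD true F (x0, y0) * v1 - pD false F (x0, y0) * v2) with
    ((F (x, y) - F (x0, y) - pD true F (x0, y) * v1) + (pD true F (x0, y) - pD true F (x0, y0)) * v1
     + (F (x0, y) - F (x0, y0) - pD false F (x0, y0) * v2)) by ring.
  eapply Rle_trans; [apply Rabs_triang|]. eapply Rle_trans; [apply Rplus_le_compat_r, Rabs_triang|].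
  assert (0 <= B * (Rabs v1 * Rabs v2)) by (apply Rmult_le_pos; [|apply Rmult_le_pos]; auto; apply Rabs_pos).
  replace (B * (Rabs v1 + Rabs v2) ^ 2) with
    (B * Rabs v1 * Rabs v1 + B * Rabs v2 * Rabs v1 + B * Rabs v2 * Rabs v2 + B * (Rabs v1 * Rabs v2))
    by ring.
  lra.
Qed.

Lemma bigO_Rabs m f : bigO m f -> bigO m (fun t => Rabs (f t)).
Proof.
  intros [C [HC H]]. exists C. split; auto.
  eapply filter_imp; [|exact H]. intros t Ht. now rewrite Rabs_Rabsolu.
Qed.

Lemma bigO_taylor1_2d G x0 y0 m d1 d2 : (0 < m)%nat -> smooth2_at (x0, y0) G ->
  bigO m d1 -> bigO m d2 ->
  bigO (m + m) (fun s => G (x0 + d1 s, y0 + d2 s) - G (x0, y0)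
                         - pD true G (x0, y0) * d1 s - pD false G (x0, y0) * d2 s).
Proof.
  intros Hm Hs H1 H2. destruct (taylor1_2d G x0 y0 Hs) as [C [e [HC [He HL]]]].
  assert (Hsq : bigO (m + m) (fun s => (Rabs (d1 s) + Rabs (d2 s)) * (Rabs (d1 s) + Rabs (d2 s))))
    by (apply bigO_mult; apply bigO_plus; now apply bigO_Rabs).
  destruct Hsq as [C2 [HC2 Hsq]]. exists (C * C2). split; [now apply Rmult_le_pos|].
  generalize (filter_and _ _ Hsq (filter_and _ _ (bigO_locally_small m d1 Hm H1 e He)
                                                 (bigO_locally_small m d2 Hm H2 e He))).
  apply filter_imp. intros s [Hq [Hs1 Hs2]].
  eapply Rle_trans; [apply HL; auto|].
  rewrite Rabs_pos_eq in Hq by (apply Rmult_le_pos; apply Rplus_le_le_0_compat; apply Rabs_pos).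
  rewrite Rmult_assoc. apply Rmult_le_compat_l; auto. simpl. now rewrite Rmult_1_r.
Qed.

Lemma bigO_comp_smooth2 G x0 y0 m k d1 d2 l1 l2 : (0 < m)%nat -> (k <= m + m)%nat ->
  smooth2_at (x0, y0) G -> bigO m d1 -> bigO m d2 ->
  bigO k (fun s => d1 s - l1 s) -> bigO k (fun s => d2 s - l2 s) ->
  bigO k (fun s => G (x0 + d1 s, y0 + d2 s) - G (x0, y0)
                   - pD true G (x0, y0) * l1 s - pD false G (x0, y0) * l2 s).
Proof.
  intros Hm Hk Hs H1 H2 E1 E2.
  apply bigO_ext with (fun s => (G (x0 + d1 s, y0 + d2 s) - G (x0, y0)
      - pD true G (x0, y0) * d1 s - pD false G (x0, y0) * d2 s)
      + pD true G (x0, y0) * (d1 s - l1 s) + pD false G (x0, y0) * (d2 s - l2 s)); [intros; ring|].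
  apply bigO_plus; [apply bigO_plus|]; [|apply bigO_scal; auto..].
  apply (bigO_weaken (m + m)); auto. now apply bigO_taylor1_2d.
Qed.

Lemma locally_comp_pair (f g : R -> R) s0 (P : R * R -> Prop) :
  continuous f s0 -> continuous g s0 -> locally (f s0, g s0) P -> locally s0 (fun s => P (f s, g s)).
Proof.
  intros Hf Hg HP. destruct (locally2_box _ _ _ HP) as [e [He H]].
  assert (H1 : locally s0 (fun s => Rabs (f s - f s0) < e))
    by exact (Hf _ (locally_ball (f s0) (mkposreal e He))).
  assert (H2 : locally s0 (fun s => Rabs (g s - g s0) < e))
    by exact (Hg _ (locally_ball (g s0) (mkposreal e He))).
  generalize (filter_and _ _ H1 H2). apply filter_imp. intros s [Hs1 Hs2]. now apply H.
Qed.

Lemma locally0_line (qx qy a b : R) (P : R * R -> Prop) :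
  locally (qx, qy) P -> locally 0 (fun s => P (qx + a * s, qy + b * s)).
Proof.
  intros HP. apply (locally_comp_pair (fun s => qx + a * s) (fun s => qy + b * s)).
  - apply (ex_derive_continuous (fun s => qx + a * s)). auto_derive. auto.
  - apply (ex_derive_continuous (fun s => qy + b * s)). auto_derive. auto.
  - now rewrite !Rmult_0_r, !Rplus_0_r.
Qed.

Definition dmap (F : R * R -> R * R) (p v : R * R) : R * R :=
  (pD true (fun q => fst (F q)) p * fst v + pD false (fun q => fst (F q)) p * snd v,
   pD true (fun q => snd (F q)) p * fst v + pD false (fun q => snd (F q)) p * snd v).

Definition jac_det (F : R * R -> R * R) (p : R * R) : R := det2 (dmap F p (1, 0)) (dmap F p (0, 1)).

Lemma det2_dmap F p u v : det2 (dmap F p u) (dmap F p v) = jac_det F p * det2 u v.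
Proof. unfold jac_det, dmap, det2. cbn [fst snd]. ring. Qed.

Lemma bigO_linear_approx d c : bigO 2 (fun s => d s - c * s) -> bigO 1 d.
Proof.
  intros H. apply bigO_ext with (fun s => (d s - c * s) + c * s); [intros; ring|].
  apply bigO_plus; [apply (bigO_weaken 2); auto | apply bigO_linear].
Qed.

Lemma eq0_of_bigO2_linear c : bigO 2 (fun s => c * s) -> c = 0.
Proof.
  intros [C [HC H]]. destruct (locally0_elim _ H) as [e [He H']].
  apply eq0_of_Rabs_le_linear with C e; auto. intros t Ht.
  specialize (H' t ltac:(rewrite Rabs_pos_eq; lra)).
  rewrite Rabs_mult, (Rabs_pos_eq t) in H' by lra.
  apply Rmult_le_reg_r with t; [lra|]. simpl in H'. nra.
Qed.

(* Differentiate [Psi (Psi_inv (q + s v)) = q + s v] at [s = 0] by two first-order expansions. *)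
Lemma dmap_inverse_germ (Psi Psi_inv : R * R -> R * R) p :
  smooth_map2_at p Psi -> smooth_map2_at (Psi p) Psi_inv -> Psi_inv (Psi p) = p ->
  locally (Psi p) (fun w => Psi (Psi_inv w) = w) ->
  forall v, dmap Psi p (dmap Psi_inv (Psi p) v) = v.
Proof.
  destruct p as [px py]. destruct (Psi (px, py)) as [qx qy] eqn:Eq.
  intros [HP1 HP2] [HF1 HF2] Hqp Hloc [a b].
  set (w1 s := fst (Psi_inv (qx + a * s, qy + b * s)) - px).
  set (w2 s := snd (Psi_inv (qx + a * s, qy + b * s)) - py).
  assert (Hw : forall (G : R * R -> R) w c, smooth2_at (qx, qy) G -> G (qx, qy) = c ->
    (forall s, w s = G (qx + a * s, qy + b * s) - c) ->
    bigO 2 (fun s => w s - (pD true G (qx, qy) * a + pD false G (qx, qy) * b) * s)).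
  { intros G w c HG HGc Hws.
    assert (Hlin : forall c', bigO 2 (fun s => c' * s - c' * s))
      by (intros c'; apply bigO_ext with (fun _ => 0); [intros; ring | apply bigO_zero]).
    eapply bigO_ext; [|apply (bigO_comp_smooth2 G qx qy 1 2 (fun s => a * s) (fun s => b * s)
                               (fun s => a * s) (fun s => b * s)); auto; apply bigO_linear].
    intros s. cbv beta. rewrite Hws, HGc. ring. }
  destruct (dmap Psi_inv (qx, qy) (a, b)) as [j1 j2] eqn:Ej.
  assert (W1 : bigO 2 (fun s => w1 s - j1 * s)).
  { replace j1 with (fst (dmap Psi_inv (qx, qy) (a, b))) by now rewrite Ej.
    apply (Hw (fun q => fst (Psi_inv q)) w1 px); auto. now rewrite Hqp. }
  assert (W2 : bigO 2 (fun s => w2 s - j2 * s)).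
  { replace j2 with (snd (dmap Psi_inv (qx, qy) (a, b))) by now rewrite Ej.
    apply (Hw (fun q => snd (Psi_inv q)) w2 py); auto. now rewrite Hqp. }
  assert (Hline := locally0_line qx qy a b _ Hloc).
  assert (Hcomp : forall pr : R * R -> R, smooth2_at (px, py) (fun z => pr (Psi z)) ->
    (forall s, pr (qx + a * s, qy + b * s) = pr (qx, qy) + pr (a, b) * s) ->
    pD true (fun z => pr (Psi z)) (px, py) * j1 + pD false (fun z => pr (Psi z)) (px, py) * j2
      = pr (a, b)).
  { intros pr HG Hpr.
    assert (Z : pr (a, b) - (pD true (fun z => pr (Psi z)) (px, py) * j1
                 + pD false (fun z => pr (Psi z)) (px, py) * j2) = 0); [|lra].
    apply eq0_of_bigO2_linear.
    eapply bigO_ext_loc; [|apply (bigO_comp_smooth2 (fun z => pr (Psi z)) px py 1 2 w1 w2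
                                    (fun s => j1 * s) (fun s => j2 * s)); auto;
                           eapply bigO_linear_approx; eauto].
    eapply filter_imp; [|exact Hline]. intros s Hs. unfold w1, w2.
    rewrite !Rplus_minus, <- surjective_pairing, Hs, Eq, Hpr. ring. }
  unfold dmap. cbn [fst snd]. f_equal; apply Hcomp; auto.
Qed.

Lemma jac_det_inverse_germ_neq0 (Psi Psi_inv : R * R -> R * R) p :
  smooth_map2_at p Psi -> smooth_map2_at (Psi p) Psi_inv -> Psi_inv (Psi p) = p ->
  locally (Psi p) (fun w => Psi (Psi_inv w) = w) -> jac_det Psi_inv (Psi p) <> 0.
Proof.
  intros H1 H2 H3 H4 HJ.
  assert (E := det2_dmap Psi p (dmap Psi_inv (Psi p) (1, 0)) (dmap Psi_inv (Psi p) (0, 1))).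
  rewrite !(dmap_inverse_germ Psi Psi_inv p) in E by auto.
  fold (jac_det Psi_inv (Psi p)) in E. rewrite HJ in E. unfold det2 in E. simpl in E. lra.
Qed.

(** * Invariance of the conditions under A-equivalence *)

Lemma bigO0_of_expansion1 u p : bigO 2 (fun s => u s - 1 - p * s) -> bigO 0 u.
Proof.
  intros H. apply bigO_ext with (fun s => (u s - 1 - p * s) + 1 + p * s); [intros; ring|].
  apply bigO_plus; [apply bigO_plus|]; [apply (bigO_weaken 2); auto | apply bigO_const |].
  apply (bigO_weaken 1); [lia | apply bigO_linear].
Qed.

Lemma bigO_pow_expansion1 u p : bigO 2 (fun s => u s - 1 - p * s) ->
  forall k, bigO 2 (fun s => u s ^ k - 1 - INR k * p * s).
Proof.
  intros Hu k. induction k as [|k IH].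
  - apply bigO_ext with (fun _ => 0); [intros; simpl; ring | apply bigO_zero].
  - apply bigO_ext with (fun s => INR k * p * p * s ^ 2 + (u s - 1 - p * s) * u s ^ k
        + (1 + p * s) * (u s ^ k - 1 - INR k * p * s)); [intros s; rewrite S_INR; simpl; ring|].
    apply bigO_plus; [apply bigO_plus|].
    + now apply bigO_monomial.
    + apply (bigO_mult 2 0); auto. apply bigO0_of_expansion1 with (INR k * p). exact IH.
    + apply (bigO_mult 0 2); auto. apply bigO_plus; [apply bigO_const|].
      apply (bigO_weaken 1); [lia | apply bigO_linear].
Qed.

Lemma bigO_pow_sub1 u p k : bigO 2 (fun s => u s - 1 - p * s) -> bigO 1 (fun s => u s ^ k - 1).
Proof.
  intros H. apply bigO_linear_approx with (INR k * p).
  apply bigO_ext with (fun s => u s ^ k - 1 - INR k * p * s); [intros; ring|].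
  now apply bigO_pow_expansion1.
Qed.

(** Coefficient of [s^2] in [(1 + p s + q s^2)^k]. *)
Definition pow_coef2 (k : nat) (p q : R) : R := INR k * q + INR k * (INR k - 1) / 2 * p ^ 2.

Lemma bigO_pow_expansion2 u p q : bigO 3 (fun s => u s - 1 - p * s - q * s ^ 2) ->
  forall k, bigO 3 (fun s => u s ^ k - 1 - INR k * p * s - pow_coef2 k p q * s ^ 2).
Proof.
  intros Hu k. induction k as [|k IH].
  - apply bigO_ext with (fun _ => 0); [intros; unfold pow_coef2; simpl; field | apply bigO_zero].
  - assert (Hb : bigO 0 (fun s => u s ^ k)).
    { apply bigO_ext with (fun s => (u s ^ k - 1 - INR k * p * s - pow_coef2 k p q * s ^ 2)
        + 1 + INR k * p * s + pow_coef2 k p q * s ^ 2); [intros; ring|].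
      apply bigO_plus; [apply bigO_plus; [apply bigO_plus|]|];
        [apply (bigO_weaken 3); auto | apply bigO_const
        | apply (bigO_weaken 1); [lia | apply bigO_linear] | apply bigO_monomial; lia]. }
    apply bigO_ext with (fun s => s ^ 3 * (p * pow_coef2 k p q + q * INR k * p + q * pow_coef2 k p q * s)
        + (u s - 1 - p * s - q * s ^ 2) * u s ^ k
        + (1 + p * s + q * s ^ 2) * (u s ^ k - 1 - INR k * p * s - pow_coef2 k p q * s ^ 2)).
    { intros s. unfold pow_coef2. rewrite S_INR. simpl. field. }
    apply bigO_plus; [apply bigO_plus|].
    + apply (bigO_pow_mul 3 0), bigO_plus; [apply bigO_const | apply (bigO_weaken 1); [lia | apply bigO_linear]].
    + now apply (bigO_mult 3 0).
    + apply (bigO_mult 0 3); auto. apply bigO_plus; [apply bigO_plus|];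
        [apply bigO_const | apply (bigO_weaken 1); [lia | apply bigO_linear] | apply bigO_monomial; lia].
Qed.

Lemma diffeo1_germ_Derive_neq0 psi psi_inv : diffeo1_germ 0 psi psi_inv -> Derive psi 0 <> 0.
Proof.
  intros [Hs [Hsi [Hi1 _]]].
  assert (D1 : Derive (fun x => psi_inv (psi x)) 0 = 1)
    by (rewrite (Derive_ext_loc _ (fun x => x)); [apply Derive_id | exact Hi1]).
  rewrite Derive_comp in D1; [| apply (locally_singleton _ _ Hsi 0%nat) | apply (locally_singleton _ _ Hs 0%nat)].
  intros H. rewrite H in D1. lra.
Qed.

Lemma diffeo1_germ_expansion psi psi_inv : diffeo1_germ 0 psi psi_inv -> psi 0 = 0 ->
  exists c p u, c <> 0 /\ (forall s, psi s = c * s * u s) /\ bigO 2 (fun s => u s - 1 - p * s).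
Proof.
  intros Hd Hp0. pose proof (diffeo1_germ_Derive_neq0 _ _ Hd) as Hc.
  set (c := Derive psi 0) in *. destruct Hd as [Hs _].
  exists c, (taylor_coef psi 2 / c), (fun s => 1 + (psi s - c * s) / (c * s)).
  split; [|split]; auto.
  - intros s. destruct (Req_dec s 0) as [->|Hs0]; [rewrite Hp0; ring | field; auto].
  - apply bigO_ext with (fun s => / c * ((psi s - taylor_poly psi 2 s) / s));
      [|apply bigO_scal, bigO_div, taylor_bigO; auto].
    intros s. unfold taylor_poly, taylor_coef. cbn [sum_f_R0]. simpl Derive_n at 1 2.
    rewrite Hp0. fold c. destruct (Req_dec s 0) as [->|Hs0].
    + rewrite Hp0. unfold Rdiv. rewrite !Rmult_0_r, Rinv_0. ring.
    + simpl. change (Derive (fun x => psi x) 0) with c. field. auto.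
Qed.

Lemma bigO_reparam_pow k c p u psi h : (forall s, psi s = c * s * u s) ->
  bigO 2 (fun s => u s - 1 - p * s) -> bigO (S (S k)) h ->
  bigO (S (S k)) (fun s => psi s ^ k + h (psi s) - c ^ k * s ^ k - c ^ k * INR k * p * s ^ S k).
Proof.
  intros Hpsi Hu Hh.
  assert (Hpsi1 : bigO 1 psi).
  { apply bigO_ext with (fun s => (c * s) * u s); [intros; now rewrite Hpsi|].
    apply (bigO_mult 1 0); [apply bigO_linear | now apply bigO0_of_expansion1 with p]. }
  apply bigO_ext with (fun s => c ^ k * (s ^ k * (u s ^ k - 1 - INR k * p * s)) + h (psi s)).
  - intros s. rewrite Hpsi, !Rpow_mult_distr. simpl. ring.
  - apply bigO_plus; [apply bigO_scal | now apply bigO_comp].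
    replace (S (S k)) with (k + 2)%nat by lia. apply bigO_pow_mul. now apply bigO_pow_expansion1.
Qed.

Lemma smooth1_at_continuous x f : smooth1_at x f -> continuous f x.
Proof. intros H. apply (ex_derive_continuous f x). exact (locally_singleton _ _ H 0%nat). Qed.

Lemma smooth_curve_locally (gamma : R -> R * R) (Q : R * R -> Prop) : smooth_curve_at 0 gamma ->
  locally (gamma 0) Q -> locally 0 (fun s => Q (gamma s)).
Proof.
  intros [H1 H2] HQ. rewrite (surjective_pairing (gamma 0)) in HQ.
  eapply filter_imp; [|apply (locally_comp_pair (fun s => fst (gamma s)) (fun s => snd (gamma s)));
                       [apply smooth1_at_continuous; exact H1 | apply smooth1_at_continuous; exact H2 | exact HQ]].
  intros s Hs. cbv beta in Hs. now rewrite <- surjective_pairing in Hs.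
Qed.

Lemma A_equiv_at0_pullback (gamma g0 : R -> R * R) psi psi_inv Psi Psi_inv :
  smooth_curve_at 0 gamma -> diffeo1_germ 0 psi psi_inv -> psi 0 = 0 ->
  diffeo2_germ (gamma 0) Psi Psi_inv -> locally 0 (fun t => Psi (gamma (psi_inv t)) = g0 t) ->
  locally 0 (fun s => gamma s = Psi_inv (g0 (psi s))).
Proof.
  intros Hg [Hs [_ [Hi1 _]]] Hp0 [_ [_ [HI1 _]]] Hloc.
  assert (Hloc' : locally 0 (fun s => Psi (gamma (psi_inv (psi s))) = g0 (psi s))).
  { rewrite <- Hp0 in Hloc. exact (smooth1_at_continuous _ _ Hs _ Hloc). }
  generalize (filter_and _ _ Hloc' (filter_and _ _ Hi1 (smooth_curve_locally _ _ Hg HI1))).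
  apply filter_imp. intros s [S1 [S2 S3]]. rewrite S2 in S1. now rewrite <- S1, S3.
Qed.

Lemma gap_expansion_pullback (G : R * R -> R) (g d1 d2 : R -> R) n c p : (2 <= n)%nat ->
  smooth2_at (0, 0) G ->
  bigO (S (S n)) (fun s => d1 s - c ^ n * s ^ n - c ^ n * INR n * p * s ^ S n) ->
  bigO (S (S n)) (fun s => d2 s - c ^ S n * s ^ S n) ->
  locally 0 (fun s => g s = G (d1 s, d2 s)) ->
  bigO (S (S n)) (fun s => g s - (G (0, 0) + pD true G (0, 0) * c ^ n * s ^ n
    + (pD true G (0, 0) * (c ^ n * INR n * p) + pD false G (0, 0) * c ^ S n) * s ^ S n)).
Proof.
  intros Hn HG H1 H2 Hg.
  assert (D1 : bigO n d1).
  { apply bigO_ext with (fun s => (d1 s - c ^ n * s ^ n - c ^ n * INR n * p * s ^ S n)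
      + c ^ n * s ^ n + (c ^ n * INR n * p) * s ^ S n); [intros; ring|].
    apply bigO_plus; [apply bigO_plus|]; [apply (bigO_weaken (S (S n))); auto; lia | |];
      apply bigO_monomial; lia. }
  assert (D2 : bigO n d2).
  { apply bigO_ext with (fun s => (d2 s - c ^ S n * s ^ S n) + c ^ S n * s ^ S n); [intros; ring|].
    apply bigO_plus; [apply (bigO_weaken (S (S n))); auto; lia | apply bigO_monomial; lia]. }
  eapply bigO_ext_loc;
    [|apply (bigO_comp_smooth2 G 0 0 n (S (S n)) d1 d2
             (fun s => c ^ n * s ^ n + c ^ n * INR n * p * s ^ S n) (fun s => c ^ S n * s ^ S n));
      auto; [lia | lia | eapply bigO_ext; [|exact H1]; intros; simpl; ring]].
  eapply filter_imp; [|exact Hg]. intros s Hs. rewrite Hs, !Rplus_0_l. ring.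
Qed.

Lemma deriv_vec_eq0 (g : R -> R * R) k t : deriv_vec g k t = (0, 0) <->
  Derive_n (fun s => fst (g s)) k t = 0 /\ Derive_n (fun s => snd (g s)) k t = 0.
Proof.
  unfold deriv_vec. split; [intros H; now injection H | intros [-> ->]; reflexivity].
Qed.

Lemma model_curve_reparam_expansion n (h : R -> R * R) psi psi_inv : smooth_curve_at 0 h ->
  (forall k, (k <= n + 2)%nat -> deriv_vec h k 0 = (0, 0)) ->
  diffeo1_germ 0 psi psi_inv -> psi 0 = 0 ->
  exists c p, c <> 0 /\
    bigO (S (S n)) (fun s => psi s ^ n + fst (h (psi s)) - c ^ n * s ^ n - c ^ n * INR n * p * s ^ S n) /\
    bigO (S (S n)) (fun s => psi s ^ S n + snd (h (psi s)) - c ^ S n * s ^ S n).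
Proof.
  intros [Hh1 Hh2] Hhd Hd1 Hp0.
  assert (Hhk : forall k, (k <= S (S n))%nat -> Derive_n (fun t => fst (h t)) k 0 = 0 /\
                                               Derive_n (fun t => snd (h t)) k 0 = 0)
    by (intros k Hk; apply deriv_vec_eq0, Hhd; lia).
  destruct (diffeo1_germ_expansion psi psi_inv Hd1 Hp0) as [c [p [u [Hc [Hpsi Hu]]]]].
  exists c, p. split; [|split]; auto.
  - apply (bigO_reparam_pow n c p u psi (fun t => fst (h t))); auto.
    apply bigO_of_Derive_n_eq0; auto. intros j Hj. apply Hhk. lia.
  - apply bigO_ext with (fun s => (psi s ^ S n + snd (h (psi s)) - c ^ S n * s ^ S n
      - c ^ S n * INR (S n) * p * s ^ S (S n)) + (c ^ S n * INR (S n) * p) * s ^ S (S n));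
      [intros; ring|].
    apply bigO_plus; [|now apply bigO_monomial]. apply (bigO_weaken (S (S (S n)))); [lia|].
    apply (bigO_reparam_pow (S n) c p u psi (fun t => snd (h t))); auto.
    apply bigO_of_Derive_n_eq0; auto. intros j Hj. apply Hhk. lia.
Qed.

Lemma A_equiv_at0_base_point (gamma g0 : R -> R * R) psi psi_inv (Psi : R * R -> R * R) :
  diffeo1_germ 0 psi psi_inv -> psi 0 = 0 ->
  locally 0 (fun t => Psi (gamma (psi_inv t)) = g0 t) -> Psi (gamma 0) = g0 0.
Proof.
  intros [_ [_ [Hi1 _]]] Hp0 Hloc. apply locally_singleton in Hi1, Hloc.
  rewrite Hp0 in Hi1. now rewrite Hi1 in Hloc.
Qed.

Lemma model_curve_conditions_of_A_equiv n (gamma h : R -> R * R) :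
  (2 <= n)%nat -> smooth_curve_at 0 gamma -> smooth_curve_at 0 h ->
  (forall k, (k <= n + 2)%nat -> deriv_vec h k 0 = (0, 0)) ->
  A_equiv_at0 gamma (fun t => (t ^ n + fst (h t), t ^ (S n) + snd (h t))) ->
  (forall k, (1 <= k <= n - 1)%nat -> deriv_vec gamma k 0 = (0, 0)) /\
  det2 (deriv_vec gamma n 0) (deriv_vec gamma (S n) 0) <> 0.
Proof.
  intros Hn Hg Hh Hhd [psi [psi_inv [Psi [Psi_inv [Hd1 [Hp0 [Hd2 Hloc]]]]]]].
  destruct (model_curve_reparam_expansion n h psi psi_inv Hh Hhd Hd1 Hp0) as [c [p [Hc [E1 E2]]]].
  assert (HPg : Psi (gamma 0) = (0, 0)).
  { rewrite (A_equiv_at0_base_point _ _ _ _ _ Hd1 Hp0 Hloc).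
    assert (Hh0 := Hhd 0%nat ltac:(lia)). simpl in Hh0. injection Hh0 as -> ->.
    rewrite !pow_i by lia. f_equal; ring. }
  assert (Hpull := A_equiv_at0_pullback gamma _ psi psi_inv Psi Psi_inv Hg Hd1 Hp0 Hd2 Hloc).
  pose proof Hd2 as [HPs [HPis [HI1 HI2]]]. rewrite HPg in HPis. destruct HPis as [HF1 HF2].
  assert (HPig : Psi_inv (0, 0) = gamma 0) by (rewrite <- HPg; exact (locally_singleton _ _ HI1)).
  set (J pr b := pD b (fun z : R * R => pr (Psi_inv z)) (0, 0)).
  assert (Hgap : forall pr : R * R -> R, smooth2_at (0, 0) (fun z => pr (Psi_inv z)) ->
    smooth1_at 0 (fun s => pr (gamma s)) ->
    (forall k, (1 <= k <= n - 1)%nat -> Derive_n (fun s => pr (gamma s)) k 0 = 0) /\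
    Derive_n (fun s => pr (gamma s)) n 0 = INR (fact n) * (J pr true * c ^ n) /\
    Derive_n (fun s => pr (gamma s)) (S n) 0 =
      INR (fact (S n)) * (J pr true * (c ^ n * INR n * p) + J pr false * c ^ S n)).
  { intros pr HG Hs. apply Derive_n_of_gap_expansion with (pr (gamma 0)); [lia | auto |].
    rewrite <- HPig.
    assert (Hexp := gap_expansion_pullback (fun z => pr (Psi_inv z)) (fun s => pr (gamma s))
                 (fun s => psi s ^ n + fst (h (psi s))) (fun s => psi s ^ S n + snd (h (psi s)))
                 n c p Hn HG E1 E2).
    refine (bigO_ext _ _ _ _ (Hexp _)).
    - intros s. unfold J. ring.
    - eapply filter_imp; [|exact Hpull]. intros s Hs0. now rewrite Hs0. }
  destruct Hg as [Hg1 Hg2].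
  destruct (Hgap fst HF1 Hg1) as [Z1 [A1 B1]]. destruct (Hgap snd HF2 Hg2) as [Z2 [A2 B2]].
  assert (HJ := jac_det_inverse_germ_neq0 Psi Psi_inv (gamma 0) HPs ltac:(now rewrite HPg)
                  (locally_singleton _ _ HI1) HI2).
  rewrite HPg in HJ. split.
  - intros k Hk. apply deriv_vec_eq0. split; auto.
  - unfold deriv_vec. rewrite A1, A2, B1, B2.
    replace (det2 _ _) with (INR (fact n) * INR (fact (S n)) * (c ^ n * c ^ S n) * jac_det Psi_inv (0, 0))
      by (unfold jac_det, dmap, det2, J; cbn [fst snd]; ring).
    repeat apply Rmult_integral_contrapositive_currified; auto; try apply INR_fact_neq_0;
      apply pow_nonzero; auto.
Qed.

(** * Reduction to the normal form *)

Definition reparam_den (al be s : R) : R := 1 - al * s - be * s ^ 2.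

Definition reparam (al be s : R) : R := s / reparam_den al be s.

(* Solves [be * t * s^2 + (1 + al * t) * s - t = 0] for [s], i.e. [reparam al be s = t], with the
   root written so that it stays smooth at [t = 0] whatever the sign of [be]. *)
Definition reparam_inv (al be t : R) : R :=
  2 * t / (1 + al * t + sqrt ((1 + al * t) ^ 2 + 4 * be * t ^ 2)).

Definition reparam_rad (al be : R) : R := / (4 * (1 + Rabs al + Rabs be)).

Section reparam.

Variables al be : R.

Let r := reparam_rad al be.

Lemma reparam_rad_bounds : 0 < r /\ r <= 1/4 /\ Rabs al * r <= 1/4 /\ Rabs be * r <= 1/4.
Proof.
  unfold r, reparam_rad. assert (0 <= Rabs al) by apply Rabs_pos. assert (0 <= Rabs be) by apply Rabs_pos.
  set (L := 1 + Rabs al + Rabs be).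
  assert (E : / (4 * L) = 1/4 * / L) by (field; unfold L; lra).
  assert (0 < / L <= 1).
  { split; [apply Rinv_0_lt_compat; unfold L; lra|]. rewrite <- Rinv_1. apply Rinv_le_contravar; unfold L; lra. }
  assert (Rabs al * / L <= 1 /\ Rabs be * / L <= 1) as [Ha Hb].
  { split; apply Rmult_le_reg_r with L; try (unfold L; lra);
      rewrite Rmult_assoc, Rinv_l by (unfold L; lra); unfold L; lra. }
  rewrite E. split; [|split]; [lra | lra | split; nra].
Qed.

Lemma Rabs_mult_small x y : Rabs x * r <= 1/4 -> Rabs y < r -> Rabs (x * y) <= 1/4.
Proof.
  intros H1 H2. rewrite Rabs_mult. apply Rle_trans with (Rabs x * r); auto.
  apply Rmult_le_compat_l; [apply Rabs_pos | lra].
Qed.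

Lemma Rabs_quadratic_small s : Rabs s < r -> Rabs (be * s ^ 2) <= 1/16.
Proof.
  intros Hs. destruct reparam_rad_bounds as [R0 [R1 [_ R3]]].
  rewrite Rabs_mult, <- RPow_abs. simpl. rewrite Rmult_1_r.
  assert (0 <= Rabs s) by apply Rabs_pos. assert (0 <= Rabs be) by apply Rabs_pos.
  assert (Rabs s * Rabs s <= r * (1/4)) by nra. nra.
Qed.

Lemma reparam_den_bounds s : Rabs s < r -> 1/2 < reparam_den al be s < 3/2.
Proof.
  intros Hs. destruct reparam_rad_bounds as [_ [_ [R2 _]]].
  assert (H1 := Rabs_mult_small al s R2 Hs). assert (H2 := Rabs_quadratic_small s Hs).
  unfold reparam_den. apply Rabs_le_between in H1, H2. lra.
Qed.

Lemma Rabs_reparam_le s : Rabs s < r -> Rabs (reparam al be s) <= 2 * Rabs s.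
Proof.
  intros Hs. destruct (reparam_den_bounds s Hs). unfold reparam, Rdiv.
  rewrite Rabs_mult, Rabs_inv, (Rabs_pos_eq (reparam_den _ _ _)) by lra.
  assert (0 < / reparam_den al be s <= 2).
  { split; [apply Rinv_0_lt_compat; lra|]. replace 2 with (/ (1/2)) by field. apply Rinv_le_contravar; lra. }
  assert (0 <= Rabs s) by apply Rabs_pos. nra.
Qed.

Lemma reparam_inv_den_bounds t : Rabs t < r ->
  3/4 <= 1 + al * t <= 5/4 /\ 1/4 < (1 + al * t) ^ 2 + 4 * be * t ^ 2 /\
  3/4 <= 1 + al * t + sqrt ((1 + al * t) ^ 2 + 4 * be * t ^ 2).
Proof.
  intros Ht. destruct reparam_rad_bounds as [_ [_ [R2 _]]].
  assert (H1 := Rabs_mult_small al t R2 Ht). assert (H2 := Rabs_quadratic_small t Ht).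
  apply Rabs_le_between in H1, H2.
  assert (0 <= sqrt ((1 + al * t) ^ 2 + 4 * be * t ^ 2)) by apply sqrt_pos.
  repeat split; try lra. replace (4 * be * t ^ 2) with (4 * (be * t ^ 2)) by ring. simpl. nra.
Qed.

Lemma Rabs_reparam_inv_le t : Rabs t < r -> Rabs (reparam_inv al be t) <= 8/3 * Rabs t.
Proof.
  intros Ht. destruct (reparam_inv_den_bounds t Ht) as [_ [_ D]]. unfold reparam_inv, Rdiv.
  rewrite !Rabs_mult, Rabs_inv, (Rabs_pos_eq (_ + _)), (Rabs_pos_eq 2) by lra.
  assert (0 < / (1 + al * t + sqrt ((1 + al * t) ^ 2 + 4 * be * t ^ 2)) <= 4/3).
  { split; [apply Rinv_0_lt_compat; lra|]. replace (4/3) with (/ (3/4)) by field.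
    apply Rinv_le_contravar; lra. }
  assert (0 <= Rabs t) by apply Rabs_pos. nra.
Qed.

Lemma reparam_inv_root t : Rabs t < r ->
  be * t * reparam_inv al be t ^ 2 + (1 + al * t) * reparam_inv al be t - t = 0.
Proof.
  intros Ht. destruct (reparam_inv_den_bounds t Ht) as [_ [Q D]].
  set (Sq := sqrt ((1 + al * t) ^ 2 + 4 * be * t ^ 2)) in *.
  assert (S2 : Sq * Sq = (1 + al * t) ^ 2 + 4 * be * t ^ 2) by (apply sqrt_sqrt; lra).
  unfold reparam_inv. fold Sq. set (A := 1 + al * t) in *.
  apply Rmult_eq_reg_r with ((A + Sq) ^ 2); [|apply pow_nonzero; lra].
  field_simplify; [|lra]. replace (Sq ^ 2) with (Sq * Sq) by ring. rewrite S2. ring.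
Qed.

Lemma reparam_reparam_inv t : Rabs t < 3 * r / 8 -> reparam al be (reparam_inv al be t) = t.
Proof.
  intros Ht. destruct reparam_rad_bounds as [R0 _].
  assert (Ht' : Rabs t < r) by lra.
  assert (Hs : Rabs (reparam_inv al be t) < r) by (assert (H := Rabs_reparam_inv_le t Ht'); lra).
  destruct (reparam_den_bounds _ Hs) as [W1 W2].
  assert (E := reparam_inv_root t Ht'). unfold reparam.
  set (s := reparam_inv al be t) in *. unfold reparam_den in *.
  apply Rmult_eq_reg_r with (1 - al * s - be * s ^ 2); [|lra].
  unfold Rdiv. rewrite Rmult_assoc, Rinv_l by lra. simpl in *. nra.
Qed.

(* Both [s] and [reparam_inv (reparam s)] solve the quadratic equation at [t = reparam s], and the
   other root is far from [0]. *)
Lemma reparam_inv_reparam s : Rabs s < r / 8 -> reparam_inv al be (reparam al be s) = s.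
Proof.
  intros Hs. destruct reparam_rad_bounds as [R0 [R1 [R2 R3]]].
  assert (Hs' : Rabs s < r) by lra.
  destruct (reparam_den_bounds _ Hs') as [W1 W2].
  assert (Hp := Rabs_reparam_le s Hs'). set (t := reparam al be s) in *.
  assert (Ht : Rabs t < r) by lra.
  assert (Hq := Rabs_reparam_inv_le t Ht). set (s' := reparam_inv al be t) in *.
  assert (E1 := reparam_inv_root t Ht). fold s' in E1.
  assert (E2 : be * t * s ^ 2 + (1 + al * t) * s - t = 0).
  { unfold t, reparam. unfold reparam_den in *. field_simplify; [|lra]. simpl. field_simplify; lra. }
  assert (F : (s' - s) * (be * t * (s' + s) + (1 + al * t)) = 0) by (simpl in *; nra).
  destruct (reparam_inv_den_bounds t Ht) as [[A1 A2] _].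
  assert (B : Rabs (be * t * (s' + s)) <= 1/8).
  { rewrite Rabs_mult. assert (Rabs (be * t) <= 1/4) by now apply Rabs_mult_small.
    assert (Rabs (s' + s) <= 1/2) by (eapply Rle_trans; [apply Rabs_triang | lra]).
    assert (0 <= Rabs (be * t)) by apply Rabs_pos. assert (0 <= Rabs (s' + s)) by apply Rabs_pos. nra. }
  apply Rabs_le_between in B. apply Rmult_integral in F as [F|F]; lra.
Qed.

Lemma reparam_Ck k : Ck (fun s => Rabs s < r) k (reparam al be).
Proof.
  assert (HU := open_Rabs_lt r). unfold reparam, Rdiv.
  apply Ck_mult; auto; [apply Ck_id|].
  apply Ck_comp with (fun x => x <> 0); auto; [apply open_neq | apply Ck_inv | |].
  - apply Ck_ext with (fun s => 1 + (- al) * s + (- be) * s ^ 2); auto;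
      [intros; unfold reparam_den; ring | apply Ck_quadratic; auto].
  - intros x Hx. destruct (reparam_den_bounds x Hx). lra.
Qed.

Lemma reparam_inv_Ck k : Ck (fun s => Rabs s < r) k (reparam_inv al be).
Proof.
  assert (HU := open_Rabs_lt r). unfold reparam_inv, Rdiv.
  apply Ck_mult; auto; [apply Ck_scal, Ck_id; auto|].
  apply Ck_comp with (fun x => x <> 0); auto; [apply open_neq | apply Ck_inv | |].
  - apply Ck_plus; auto; [apply Ck_plus; auto; [apply Ck_const | apply Ck_scal, Ck_id; auto]|].
    apply Ck_comp with (fun x => 0 < x); auto; [apply open_gt | apply Ck_sqrt | |].
    + apply Ck_ext with (fun s => 1 + (2 * al) * s + (al ^ 2 + 4 * be) * s ^ 2); auto;
        [intros; ring | apply Ck_quadratic; auto].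
    + intros x Hx. destruct (reparam_inv_den_bounds x Hx) as [_ [Q _]]. lra.
  - intros x Hx. destruct (reparam_inv_den_bounds x Hx) as [_ [_ D]]. lra.
Qed.

Lemma reparam_diffeo1_germ : diffeo1_germ 0 (reparam_inv al be) (reparam al be).
Proof.
  destruct reparam_rad_bounds as [R0 _].
  assert (H0 : reparam_inv al be 0 = 0) by (unfold reparam_inv, Rdiv; ring).
  split; [|split; [|split]]; rewrite ?H0.
  - apply smooth1_at_of_Ck with (fun s => Rabs s < r); [apply open_Rabs_lt | rewrite Rabs_R0; auto |].
    apply reparam_inv_Ck.
  - apply smooth1_at_of_Ck with (fun s => Rabs s < r); [apply open_Rabs_lt | rewrite Rabs_R0; auto |].
    apply reparam_Ck.
  - apply locally0_intro with (3 * r / 8); [lra|]. apply reparam_reparam_inv.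
  - apply locally0_intro with (r / 8); [lra|]. apply reparam_inv_reparam.
Qed.

Lemma reparam_factor_bigO0 : bigO 0 (fun s => / reparam_den al be s).
Proof.
  destruct reparam_rad_bounds as [R0 _].
  exists 2. split; [lra|]. apply locally0_intro with r; auto. intros t Ht.
  destruct (reparam_den_bounds t Ht). simpl. rewrite Rmult_1_r, Rabs_inv, Rabs_pos_eq by lra.
  replace 2 with (/ (1/2)) by field. apply Rinv_le_contravar; lra.
Qed.

Lemma reparam_factor_expansion :
  bigO 3 (fun s => / reparam_den al be s - 1 - al * s - (be + al ^ 2) * s ^ 2).
Proof.
  destruct reparam_rad_bounds as [R0 _].
  apply bigO_ext_loc with (fun s => s ^ 3 * ((2 * al * be + al ^ 3 + be * (be + al ^ 2) * s)
                                            * / reparam_den al be s)).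
  - apply locally0_intro with r; auto. intros t Ht. destruct (reparam_den_bounds t Ht).
    unfold reparam_den in *. field. lra.
  - apply (bigO_pow_mul 3 0), (bigO_mult 0 0); [|apply reparam_factor_bigO0].
    apply bigO_plus; [apply bigO_const | apply (bigO_weaken 1); [lia | apply bigO_linear]].
Qed.

Lemma reparam_bigO1 : bigO 1 (reparam al be).
Proof.
  apply (bigO_mult 1 0); [|apply reparam_factor_bigO0].
  apply bigO_ext with (fun s => 1 * s); [intros; ring | apply bigO_linear].
Qed.

End reparam.

(* Cramer's rule for the unknowns [pow_coef2 n al ka] and [(n + 1) al]. *)
Lemma reparam_coef_solve n A1 B1 C1 A2 B2 C2 : (1 <= n)%nat -> A1 * B2 - A2 * B1 <> 0 ->
  exists al ka, pow_coef2 n al ka * A1 + INR (S n) * al * B1 + C1 = 0 /\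
                pow_coef2 n al ka * A2 + INR (S n) * al * B2 + C2 = 0.
Proof.
  intros Hn HD. set (D := A1 * B2 - A2 * B1) in *.
  assert (HN : INR n <> 0) by (apply not_0_INR; lia).
  assert (HSN : INR (S n) <> 0) by (apply not_0_INR; lia).
  set (al := - ((A1 * C2 - A2 * C1) / D) / INR (S n)).
  exists al, (- ((C1 * B2 - C2 * B1) / D + INR n * (INR n - 1) / 2 * al ^ 2) / INR n).
  unfold pow_coef2, al, D in *. split; field; auto.
Qed.

(* Writing [reparam al be s = s * u s] with [u s = 1 + al s + ka s^2 + O(s^3)], the coefficient
   of [s^(n+2)] in [g (reparam al be s)] is the left-hand side of the hypothesis [HK]. *)
Lemma gap_expansion_reparam (g : R -> R) n al be g0 A B C :
  pow_coef2 n al (be + al ^ 2) * A + INR (S n) * al * B + C = 0 ->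
  bigO (S (S (S n))) (fun t => g t - (g0 + A * t ^ n + B * t ^ S n + C * t ^ S (S n))) ->
  bigO (S (S (S n))) (fun s => g (reparam al be s) - g0 - A * s ^ n
                               - (INR n * al * A + B) * s ^ S n).
Proof.
  intros HK HE. set (ka := be + al ^ 2) in *. set (u s := / reparam_den al be s).
  assert (Hu3 := reparam_factor_expansion al be). fold ka in Hu3.
  assert (Hu2 : bigO 2 (fun s => u s - 1 - al * s)).
  { apply bigO_ext with (fun s => (u s - 1 - al * s - ka * s ^ 2) + ka * s ^ 2); [intros; ring|].
    apply bigO_plus; [apply (bigO_weaken 3); auto | apply bigO_monomial; lia]. }
  apply bigO_ext with (fun s =>
       A * (s ^ n * (u s ^ n - 1 - INR n * al * s - pow_coef2 n al ka * s ^ 2))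
     + B * (s ^ S n * (u s ^ S n - 1 - INR (S n) * al * s))
     + C * (s ^ S (S n) * (u s ^ S (S n) - 1))
     + (g (reparam al be s) - (g0 + A * reparam al be s ^ n + B * reparam al be s ^ S n
                                + C * reparam al be s ^ S (S n)))
     + (pow_coef2 n al ka * A + INR (S n) * al * B + C) * s ^ S (S n)).
  - intros s. unfold reparam at 2 3 4. unfold Rdiv. fold (u s). rewrite !Rpow_mult_distr.
    rewrite S_INR. cbn [pow]. ring.
  - rewrite HK. apply bigO_plus; [apply bigO_plus; [apply bigO_plus; [apply bigO_plus|]|]|].
    + apply bigO_scal. replace (S (S (S n))) with (n + 3)%nat by lia.
      apply bigO_pow_mul. now apply bigO_pow_expansion2.
    + apply bigO_scal. replace (S (S (S n))) with (S n + 2)%nat by lia.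
      apply bigO_pow_mul. now apply bigO_pow_expansion1.
    + apply bigO_scal. replace (S (S (S n))) with (S (S n) + 1)%nat by lia.
      apply bigO_pow_mul. now apply bigO_pow_sub1 with al.
    + apply (bigO_comp _ (fun t => g t - (g0 + A * t ^ n + B * t ^ S n + C * t ^ S (S n))));
        [exact HE | apply reparam_bigO1].
    + apply bigO_ext with (fun _ => 0); [intros; ring | apply bigO_zero].
Qed.

Definition affine_form (c1 c2 c0 : R) (q : R * R) : R := c1 * fst q + c2 * snd q + c0.

Lemma iterD_affine_form w c1 c2 c0 :
  exists d1 d2 d0, forall q, iterD w (affine_form c1 c2 c0) q = affine_form d1 d2 d0 q.
Proof.
  induction w as [|b w IH]; [now exists c1, c2, c0|].
  destruct IH as [d1 [d2 [d0 H]]]. exists 0, 0, (if b then d1 else d2). intros q. simpl. unfold pD.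
  destruct b.
  - rewrite (Derive_ext _ (fun t => d1 * t + (d2 * snd q + d0))) by (intros t; rewrite H; unfold affine_form; simpl; ring).
    apply is_derive_unique. auto_derive; auto. unfold affine_form. ring.
  - rewrite (Derive_ext _ (fun t => d2 * t + (d1 * fst q + d0))) by (intros t; rewrite H; unfold affine_form; simpl; ring).
    apply is_derive_unique. auto_derive; auto. unfold affine_form. ring.
Qed.

Lemma continuous_affine_form d1 d2 d0 q : continuous (affine_form d1 d2 d0) q.
Proof.
  apply filterlim_locally. intros eps. destruct q as [x0 y0].
  assert (0 <= Rabs d1) by apply Rabs_pos. assert (0 <= Rabs d2) by apply Rabs_pos.
  set (e := eps / (Rabs d1 + Rabs d2 + 1)).
  assert (He : 0 < e) by (apply Rdiv_lt_0_compat; [apply cond_pos | lra]).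
  assert (E : e * (Rabs d1 + Rabs d2 + 1) = eps) by (unfold e; field; lra).
  apply box_locally2 with e; auto. intros x y Hx Hy.
  change (Rabs (affine_form d1 d2 d0 (x, y) - affine_form d1 d2 d0 (x0, y0)) < eps).
  unfold affine_form. cbn [fst snd].
  replace (d1 * x + d2 * y + d0 - (d1 * x0 + d2 * y0 + d0)) with (d1 * (x - x0) + d2 * (y - y0)) by ring.
  eapply Rle_lt_trans; [apply Rabs_triang|]. rewrite !Rabs_mult.
  assert (Rabs d1 * Rabs (x - x0) <= Rabs d1 * e) by (apply Rmult_le_compat_l; lra).
  assert (Rabs d2 * Rabs (y - y0) <= Rabs d2 * e) by (apply Rmult_le_compat_l; lra).
  nra.
Qed.

Lemma smooth2_at_affine_form p c1 c2 c0 : smooth2_at p (affine_form c1 c2 c0).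
Proof.
  unfold smooth2_at. apply filter_forall. intros q w. destruct (iterD_affine_form w c1 c2 c0) as [d1 [d2 [d0 H]]].
  split; [|split].
  - apply continuous_ext with (affine_form d1 d2 d0); [intros; now rewrite H | apply continuous_affine_form].
  - apply ex_derive_ext with (fun t => d1 * t + (d2 * snd q + d0));
      [intros t; rewrite H; unfold affine_form; simpl; ring | auto_derive; auto].
  - apply ex_derive_ext with (fun t => d2 * t + (d1 * fst q + d0));
      [intros t; rewrite H; unfold affine_form; simpl; ring | auto_derive; auto].
Qed.

Definition affine_map (a11 a12 a21 a22 b1 b2 : R) (q : R * R) : R * R :=
  (affine_form a11 a12 b1 q, affine_form a21 a22 b2 q).

Definition affine_map_inv (a11 a12 a21 a22 b1 b2 : R) : R * R -> R * R :=
  let d := a11 * a22 - a12 * a21 in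
  affine_map (a22 / d) (- a12 / d) (- a21 / d) (a11 / d)
             ((a12 * b2 - a22 * b1) / d) ((a21 * b1 - a11 * b2) / d).

Section affine_map.

Variables a11 a12 a21 a22 b1 b2 : R.
Hypothesis Hdet : a11 * a22 - a12 * a21 <> 0.

Let F := affine_map a11 a12 a21 a22 b1 b2.
Let G := affine_map_inv a11 a12 a21 a22 b1 b2.

Lemma affine_map_inv_fst q x y : fst (G q) - x =
  a22 / (a11 * a22 - a12 * a21) * (fst q - fst (F (x, y)))
  - a12 / (a11 * a22 - a12 * a21) * (snd q - snd (F (x, y))).
Proof. unfold F, G, affine_map_inv, affine_map, affine_form. cbn [fst snd]. field. auto. Qed.

Lemma affine_map_inv_snd q x y : snd (G q) - y =
  - a21 / (a11 * a22 - a12 * a21) * (fst q - fst (F (x, y)))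
  + a11 / (a11 * a22 - a12 * a21) * (snd q - snd (F (x, y))).
Proof. unfold F, G, affine_map_inv, affine_map, affine_form. cbn [fst snd]. field. auto. Qed.

Lemma bigO_affine_map_inv m (q : R -> R * R) (x y : R -> R) :
  bigO m (fun s => fst (q s) - b1 - a11 * x s - a12 * y s) ->
  bigO m (fun s => snd (q s) - b2 - a21 * x s - a22 * y s) ->
  bigO m (fun s => fst (G (q s)) - x s) /\ bigO m (fun s => snd (G (q s)) - y s).
Proof.
  intros H1 H2. set (d := a11 * a22 - a12 * a21).
  split.
  - apply bigO_ext with (fun s => a22 / d * (fst (q s) - b1 - a11 * x s - a12 * y s)
                                  - a12 / d * (snd (q s) - b2 - a21 * x s - a22 * y s)).
    + intros s. rewrite (affine_map_inv_fst _ _ (y s)). unfold F, affine_map, affine_form.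
      cbn [fst snd]. fold d. ring.
    + apply bigO_minus; now apply bigO_scal.
  - apply bigO_ext with (fun s => - a21 / d * (fst (q s) - b1 - a11 * x s - a12 * y s)
                                  + a11 / d * (snd (q s) - b2 - a21 * x s - a22 * y s)).
    + intros s. rewrite (affine_map_inv_snd _ (x s)). unfold F, affine_map, affine_form.
      cbn [fst snd]. fold d. ring.
    + apply bigO_plus; now apply bigO_scal.
Qed.

Lemma diffeo2_germ_affine_map p : diffeo2_germ p G F.
Proof.
  assert (HGF : forall q, F (G q) = q).
  { intros [x y]. unfold F, G, affine_map_inv, affine_map, affine_form. cbn [fst snd].
    f_equal; field; auto. }
  assert (HFG : forall q, G (F q) = q).
  { intros [x y]. unfold F, G, affine_map_inv, affine_map, affine_form. cbn [fst snd].
    f_equal; field; auto. }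
  split; [|split; [|split]]; try (apply filter_forall; auto);
    split; apply smooth2_at_affine_form.
Qed.

End affine_map.

Lemma smooth1_at_reparam_comb (a b : R) (g1 g2 : R -> R) al be c1 c2 c0 m : a < 0 < b ->
  (forall k, Ck (fun x => a < x < b) k g1) -> (forall k, Ck (fun x => a < x < b) k g2) ->
  smooth1_at 0 (fun s => c1 * g1 (reparam al be s) + c2 * g2 (reparam al be s) + c0 - s ^ m).
Proof.
  intros Hab H1 H2. destruct (reparam_rad_bounds al be) as [R0 _].
  set (r := Rmin (reparam_rad al be / 2) (Rmin (- a) b / 2)).
  assert (Hr : 0 < r) by (apply Rmin_pos; [lra | apply Rdiv_lt_0_compat; [apply Rmin_pos|]; lra]).
  assert (Hr1 : r <= reparam_rad al be / 2) by apply Rmin_l.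
  assert (Hr2 : r <= Rmin (- a) b / 2) by apply Rmin_r.
  assert (Hab' := Rmin_l (- a) b). assert (Hab'' := Rmin_r (- a) b).
  set (U s := Rabs s < r).
  assert (HU : open U) by apply open_Rabs_lt.
  assert (Hin : forall s, U s -> a < reparam al be s < b).
  { intros s Hs. unfold U in Hs. assert (H := Rabs_reparam_le al be s ltac:(lra)).
    apply Rabs_le_between in H. lra. }
  assert (Hphi : forall k, Ck U k (reparam al be))
    by (intros k; apply Ck_subset with (fun s => Rabs s < reparam_rad al be);
        [unfold U; intros; lra | apply reparam_Ck]).
  assert (HI := open_between a b).
  apply smooth1_at_of_Ck with U; auto; [unfold U; rewrite Rabs_R0; auto|]. intros k.
  apply Ck_plus; auto; [apply Ck_plus; auto; [apply Ck_plus; auto|]|].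
  - apply Ck_scal; auto. apply Ck_comp with (fun x => a < x < b); auto.
  - apply Ck_scal; auto. apply Ck_comp with (fun x => a < x < b); auto.
  - apply Ck_const.
  - apply Ck_ext with (fun s => (-1) * s ^ m); auto; [intros; ring|]. apply Ck_scal, Ck_pow, Ck_id; auto.
Qed.

Lemma det2_deriv_vec_taylor_coef (g : R -> R * R) n :
  det2 (deriv_vec g n 0) (deriv_vec g (S n) 0) = INR (fact n) * INR (fact (S n)) *
    (taylor_coef (fun s => fst (g s)) n * taylor_coef (fun s => snd (g s)) (S n)
     - taylor_coef (fun s => snd (g s)) n * taylor_coef (fun s => fst (g s)) (S n)).
Proof.
  unfold det2, deriv_vec, taylor_coef. cbn [fst snd]. field. split; apply INR_fact_neq_0.
Qed.

Lemma A_equiv_model_of_conditions n (a b : R) (gamma : R -> R * R) :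
  (2 <= n)%nat -> a < 0 < b -> (forall x, a < x < b -> smooth_curve_at x gamma) ->
  (forall k, (1 <= k <= n - 1)%nat -> deriv_vec gamma k 0 = (0, 0)) ->
  det2 (deriv_vec gamma n 0) (deriv_vec gamma (S n) 0) <> 0 ->
  exists h : R -> R * R, smooth_curve_at 0 h /\
    (forall k, (k <= n + 2)%nat -> deriv_vec h k 0 = (0, 0)) /\
    A_equiv_at0 gamma (fun t => (t ^ n + fst (h t), t ^ (S n) + snd (h t))).
Proof.
  intros Hn Hab Hsm Hz Hdet.
  set (g1 s := fst (gamma s)). set (g2 s := snd (gamma s)).
  assert (HC1 : forall k, Ck (fun x => a < x < b) k g1) by (apply Ck_of_smooth1_at; intros x Hx; apply Hsm, Hx).
  assert (HC2 : forall k, Ck (fun x => a < x < b) k g2) by (apply Ck_of_smooth1_at; intros x Hx; apply Hsm, Hx).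
  destruct (Hsm 0 Hab) as [Hs1 Hs2].
  assert (E1 := taylor_gap g1 n ltac:(lia) Hs1 (fun k Hk => proj1 (proj1 (deriv_vec_eq0 _ _ _) (Hz k Hk)))).
  assert (E2 := taylor_gap g2 n ltac:(lia) Hs2 (fun k Hk => proj2 (proj1 (deriv_vec_eq0 _ _ _) (Hz k Hk)))).
  set (A1 := taylor_coef g1 n) in *. set (B1 := taylor_coef g1 (S n)) in *.
  set (A2 := taylor_coef g2 n) in *. set (B2 := taylor_coef g2 (S n)) in *.
  assert (HD : A1 * B2 - A2 * B1 <> 0).
  { intros HD. apply Hdet. rewrite det2_deriv_vec_taylor_coef. fold g1 g2 A1 A2 B1 B2. rewrite HD. ring. }
  destruct (reparam_coef_solve n A1 B1 (taylor_coef g1 (S (S n))) A2 B2 (taylor_coef g2 (S (S n)))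
              ltac:(lia) HD) as [al [ka [K1 K2]]].
  set (be := ka - al ^ 2). replace ka with (be + al ^ 2) in K1, K2 by (unfold be; ring).
  assert (Err1 := gap_expansion_reparam g1 n al be _ _ _ _ K1 E1).
  assert (Err2 := gap_expansion_reparam g2 n al be _ _ _ _ K2 E2).
  set (Bp1 := INR n * al * A1 + B1) in *. set (Bp2 := INR n * al * A2 + B2) in *.
  assert (HD' : A1 * Bp2 - Bp1 * A2 <> 0) by (unfold Bp1, Bp2; intros H; apply HD; lra).
  set (D := A1 * Bp2 - Bp1 * A2) in *.
  set (Psi := affine_map_inv A1 Bp1 A2 Bp2 (g1 0) (g2 0)).
  set (h s := (fst (Psi (gamma (reparam al be s))) - s ^ n,
               snd (Psi (gamma (reparam al be s))) - s ^ S n)).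
  destruct (bigO_affine_map_inv A1 Bp1 A2 Bp2 (g1 0) (g2 0) HD' (S (S (S n)))
              (fun s => gamma (reparam al be s)) (fun s => s ^ n) (fun s => s ^ S n) Err1 Err2)
    as [H1O H2O].
  assert (Hhs : smooth_curve_at 0 h).
  { split.
    - exact (smooth1_at_reparam_comb a b g1 g2 al be (Bp2 / D) (- Bp1 / D)
               ((Bp1 * g2 0 - Bp2 * g1 0) / D) n Hab HC1 HC2).
    - exact (smooth1_at_reparam_comb a b g1 g2 al be (- A2 / D) (A1 / D)
               ((A2 * g1 0 - A1 * g2 0) / D) (S n) Hab HC1 HC2). }
  exists h. split; [|split]; auto.
  - intros k Hk. apply deriv_vec_eq0. destruct Hhs as [Hh1 Hh2].
    split; apply Derive_n_eq0_of_bigO with (S (S n)); auto; lia.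
  - exists (reparam_inv al be), (reparam al be), Psi, (affine_map A1 Bp1 A2 Bp2 (g1 0) (g2 0)).
    split; [apply reparam_diffeo1_germ|]. split; [unfold reparam_inv, Rdiv; ring|].
    split; [now apply diffeo2_germ_affine_map|].
    apply filter_forall. intros t. unfold h. cbn [fst snd].
    rewrite (surjective_pairing (Psi _)) at 1. f_equal; ring.
Qed.

Theorem mainTheorem6 (n : nat) (a b : R) (gamma : R -> R * R) :
  (2 <= n)%nat -> a < 0 < b ->
  (forall x, a < x < b -> smooth_curve_at x gamma) ->
  ((forall k : nat, (1 <= k <= n - 1)%nat -> deriv_vec gamma k 0 = (0, 0)) /\
   det2 (deriv_vec gamma n 0) (deriv_vec gamma (S n) 0) <> 0)
  <->
  (exists h : R -> R * R,
     smooth_curve_at 0 h /\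
     (forall k : nat, (k <= n + 2)%nat -> deriv_vec h k 0 = (0, 0)) /\
     A_equiv_at0 gamma (fun t => (t ^ n + fst (h t), t ^ (S n) + snd (h t)))).
Proof.
  intros Hn Hab Hsm. split.
  - intros [Hz Hdet]. now apply A_equiv_model_of_conditions with a b.
  - intros [h [Hh [Hhd HA]]]. apply model_curve_conditions_of_A_equiv with h; auto.
Qed.
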